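(* Let $T>0$, $L_x,L_y>0$, and let $R,P,Q$ be real-valued $C^2$ functions on the wedge $W_T=\{(u,x,y,z): u\ge 0,\ z\ge 0,\ u+z\le T\}$, periodic in $x$ with period $L_x$ and in $y$ with period $L_y$, satisfying $$2R_u = P_x+Q_y+R_z,\qquad P_z=R_x,\qquad Q_z=R_y .$$ Then $$\int_{\Sigma_T}\big(R_x^2+R_y^2+R_z^2+P_x^2+Q_x^2+P_y^2+Q_y^2\big)\,d\Sigma_T \le 2\left(\int_{\Sigma_u}\big(R_x^2+R_y^2+R_z^2\big)\,d\Sigma_u+\int_{\Sigma_z}\big(P_x^2+Q_x^2+P_y^2+Q_y^2\big)\,d\Sigma_z\right).$$
   Context: Coordinates $(u,x,y,z)$ with $u=t-z$, where $(t,x,y,z)$ are Cartesian Minkowski coordinates; subscripts denote partial derivatives. All integrals in $x,y$ are over one period $[0,L_x]\times[0,L_y]$. Surfaces and measures: $\Sigma_u=\{u=0,\ 0\le z\le T\}$ with $d\Sigma_u=dz\,dx\,dy$; $\Sigma_z=\{z=0,\ 0\le u\le T\}$ with $d\Sigma_z=du\,dx\,dy$; $\Sigma_T=\{u+z=T,\ 0\le z\le T\}$, on which an integral $\int_{\Sigma_T}F\,d\Sigma_T$ means $\int_0^T\int\int F(T-z,x,y,z)\,dx\,dy\,dz$. *)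

From Stdlib Require Import Reals Lra.
From Coquelicot Require Import Coquelicot.
Open Scope R_scope.

Definition fun4 := R -> R -> R -> R -> R.

(* Partial derivative with respect to coordinate i (0 = u, 1 = x, 2 = y, 3 = z). *)
Definition pd (i : nat) (f : fun4) : fun4 :=
  fun u x y z =>
    match i with
    | 0%nat => Derive (fun t => f t x y z) u
    | 1%nat => Derive (fun t => f u t y z) x
    | 2%nat => Derive (fun t => f u x t z) y
    | _ => Derive (fun t => f u x y t) z
    end.

Definition ex_pd (i : nat) (f : fun4) (u x y z : R) : Prop :=
  match i with
  | 0%nat => ex_derive (fun t => f t x y z) u
  | 1%nat => ex_derive (fun t => f u t y z) x
  | 2%nat => ex_derive (fun t => f u x t z) y
  | _ => ex_derive (fun t => f u x y t) z
  end.

Definition cont4_at (g : fun4) (u x y z : R) : Prop :=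
  forall eps : R, 0 < eps -> exists delta : R, 0 < delta /\
    forall u' x' y' z' : R,
      Rabs (u' - u) < delta -> Rabs (x' - x) < delta ->
      Rabs (y' - y) < delta -> Rabs (z' - z) < delta ->
      Rabs (g u' x' y' z' - g u x y z) < eps.

Definition C2_at (f : fun4) (u x y z : R) : Prop :=
  exists d : R, 0 < d /\
    forall u' x' y' z' : R,
      Rabs (u' - u) < d -> Rabs (x' - x) < d ->
      Rabs (y' - y) < d -> Rabs (z' - z) < d ->
      cont4_at f u' x' y' z' /\
      forall i j : nat, (i < 4)%nat -> (j < 4)%nat ->
        ex_pd i f u' x' y' z' /\ ex_pd j (pd i f) u' x' y' z' /\
        cont4_at (pd i f) u' x' y' z' /\ cont4_at (pd j (pd i f)) u' x' y' z'.

Definition in_wedge (T u z : R) : Prop := 0 <= u /\ 0 <= z /\ u + z <= T.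

Definition periodic_xy (T Lx Ly : R) (f : fun4) : Prop :=
  forall u x y z, in_wedge T u z ->
    f u (x + Lx) y z = f u x y z /\ f u x (y + Ly) z = f u x y z.

Definition int_xy (Lx Ly : R) (g : R -> R -> R) : R :=
  RInt (fun x => RInt (fun y => g x y) 0 Ly) 0 Lx.

Definition int_Sigma_u (T Lx Ly : R) (F : fun4) : R :=
  RInt (fun z => int_xy Lx Ly (fun x y => F 0 x y z)) 0 T.

Definition int_Sigma_z (T Lx Ly : R) (F : fun4) : R :=
  RInt (fun u => int_xy Lx Ly (fun x y => F u x y 0)) 0 T.

(* int over Sigma_T = {u + z = T, 0 <= z <= T}, as in the paper:
   int_0^T int int F(T - z, x, y, z) dx dy dz *)
Definition int_Sigma_T (T Lx Ly : R) (F : fun4) : R :=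
  RInt (fun z => int_xy Lx Ly (fun x y => F (T - z) x y z)) 0 T.

Definition pdu := pd 0.
Definition pdx := pd 1.
Definition pdy := pd 2.
Definition pdz := pd 3.

From Stdlib Require Import Reals Lra Lia Classical.
From Coquelicot Require Import Coquelicot.
Open Scope R_scope.

(* Energy method.  With
     A = 2 (R_x^2 + R_y^2 + R_z^2)   and   B = P_x^2 + Q_x^2 + P_y^2 + Q_y^2 - R_z^2,
   the system differentiated once, together with the symmetry of second derivatives,
   gives the pointwise conservation law
     d_u A + d_z B = 2 d_x (R_x P_x + R_y P_y + R_z R_x) + 2 d_y (R_x Q_x + R_y Q_y + R_z R_y).
   Integrating over a period cell kills the right-hand side, so the cell integrals (a, b)
   of (A, B) form a divergence-free field in the (u, z)-plane, and its flux balance on the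
   triangle u, z >= 0, u + z <= T reads
     int_{Sigma_T} (A + B) = int_{Sigma_u} A + int_{Sigma_z} B.
   The integrand on Sigma_T is at most A + B and B is at most the integrand on Sigma_z,
   whence the estimate.  The analytic work is differentiation under the integral sign;
   compactness of the wedge turns the pointwise C^2 hypothesis into one neighbourhood of
   uniform size on which every integrand is continuous. *)

Lemma ball_Rabs (y e z : R) : ball y e z -> Rabs (z - y) < e.
Proof. exact (fun H => H). Qed.

Lemma continuous_eps (f : R -> R) x :
  (forall e, 0 < e -> exists d, 0 < d /\ forall y, Rabs (y - x) < d -> Rabs (f y - f x) < e) ->
  continuous f x.
Proof.
  intros H. apply filterlim_locally. intros eps.
  destruct (H eps (cond_pos eps)) as (d & Hd & Hd'). exists (mkposreal d Hd).
  intros y Hy. apply Hd'. exact Hy.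
Qed.

Lemma continuity_2d_pt_eps (f : R -> R -> R) a b :
  (forall e, 0 < e -> exists d, 0 < d /\ forall a' b', Rabs (a' - a) < d -> Rabs (b' - b) < d ->
     Rabs (f a' b' - f a b) < e) ->
  continuity_2d_pt f a b.
Proof.
  intros H eps. destruct (H eps (cond_pos eps)) as (d & Hd & Hd'). exists (mkposreal d Hd).
  intros; apply Hd'; auto.
Qed.

Lemma is_derive_plusR (f g : R -> R) (x a b : R) :
  is_derive f x a -> is_derive g x b -> is_derive (fun t => f t + g t) x (a + b).
Proof. intros; apply (is_derive_plus f g); auto. Qed.

Lemma is_derive_minusR (f g : R -> R) (x a b : R) :
  is_derive f x a -> is_derive g x b -> is_derive (fun t => f t - g t) x (a - b).
Proof. intros; apply (is_derive_minus f g); auto. Qed.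

Lemma is_derive_multR (f g : R -> R) (x a b : R) :
  is_derive f x a -> is_derive g x b -> is_derive (fun t => f t * g t) x (a * g x + f x * b).
Proof. intros; apply (is_derive_mult f g); auto. intros; apply Rmult_comm. Qed.

Lemma is_derive_pow2 (f : R -> R) (x a : R) :
  is_derive f x a -> is_derive (fun t => f t ^ 2) x (2 * f x * a).
Proof.
  intros H. replace (2 * f x * a) with (a * f x + f x * a) by ring.
  apply (is_derive_ext (fun t => f t * f t)); [intros t; simpl; ring|].
  apply is_derive_multR; exact H.
Qed.

Lemma is_derive_eq (f : R -> R) (x l l' : R) : is_derive f x l -> l = l' -> is_derive f x l'.
Proof. intros H <-; exact H. Qed.

Lemma continuous_plusR (f g : R -> R) x :
  continuous f x -> continuous g x -> continuous (fun t => f t + g t) x.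
Proof. intros; apply (continuous_plus (V := R_NormedModule) f g x); auto. Qed.

Lemma ex_RInt_continuousR (f : R -> R) a b :
  (forall z, Rmin a b <= z <= Rmax a b -> continuous f z) -> ex_RInt f a b.
Proof. apply (@ex_RInt_continuous R_CompleteNormedModule). Qed.

Lemma is_RInt_uniqueR (f : R -> R) a b (l : R) : is_RInt f a b l -> RInt f a b = l.
Proof. apply (@is_RInt_unique R_CompleteNormedModule). Qed.

Lemma abs_RInt_minus_le (f g : R -> R) a b e :
  a <= b -> ex_RInt f a b -> ex_RInt g a b ->
  (forall y, a <= y <= b -> Rabs (f y - g y) < e) ->
  Rabs (RInt f a b - RInt g a b) <= (b - a) * e.
Proof.
  intros Hab Hf Hg H.
  assert (E := RInt_minus f g a b Hf Hg). unfold minus, plus, opp in E; simpl in E.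
  replace (RInt f a b - RInt g a b) with (RInt (fun x => f x + - g x) a b)
    by (rewrite E; reflexivity).
  apply abs_RInt_le_const; auto.
  - apply (ex_RInt_minus f g); auto.
  - intros t Ht. left. apply H; auto.
Qed.

Lemma is_derive_RInt_param_box (f df : R -> R -> R) p0 a b r :
  0 < r -> a <= b ->
  (forall p y, Rabs (p - p0) < r -> a - r < y < b + r -> is_derive (fun t => f t y) p (df p y)) ->
  (forall p y, Rabs (p - p0) < r -> a - r < y < b + r -> continuity_2d_pt df p y) ->
  (forall p y, Rabs (p - p0) < r -> a - r < y < b + r -> continuity_2d_pt f p y) ->
  is_derive (fun p => RInt (f p) a b) p0 (RInt (df p0) a b).
Proof.
  intros Hr Hab Hd Hcd Hcf.
  assert (Hmin : Rmin a b = a) by (apply Rmin_left; auto).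
  assert (Hmax : Rmax a b = b) by (apply Rmax_right; auto).
  assert (E : RInt (df p0) a b = RInt (fun t => Derive (fun u => f u t) p0) a b).
  { apply RInt_ext. intros t Ht. symmetry. apply is_derive_unique. apply Hd.
    rewrite Rminus_diag, Rabs_R0; auto. rewrite Hmin, Hmax in Ht. lra. }
  rewrite E.
  apply (is_derive_RInt_param (fun p t => f p t) a b p0).
  - exists (mkposreal r Hr). intros p Hp t Ht. rewrite Hmin, Hmax in Ht.
    eexists; apply Hd; [apply ball_Rabs in Hp; exact Hp|lra].
  - intros t Ht. rewrite Hmin, Hmax in Ht.
    apply continuity_2d_pt_ext_loc with (f := df).
    + exists (mkposreal (r/2) ltac:(lra)). intros u v Hu Hv. simpl in *.
      symmetry. apply is_derive_unique. apply Hd; [|apply Rabs_lt_between' in Hv; lra].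
      lra.
    + apply Hcd; [rewrite Rminus_diag, Rabs_R0; auto|lra].
  - exists (mkposreal r Hr). intros p Hp. apply ball_Rabs in Hp.
    apply ex_RInt_continuousR. intros z Hz. rewrite Hmin, Hmax in Hz.
    apply continuous_eps. intros e He.
    destruct (Hcf p z Hp ltac:(lra) (mkposreal e He)) as (d & Hd').
    exists d; split; [apply cond_pos|]. intros y Hy. apply Hd'; auto.
    rewrite Rminus_diag, Rabs_R0; apply cond_pos.
Qed.

Lemma clamp_interval a b r x : a <= b -> 0 < r -> a - r < x < b + r ->
  exists c, a <= c <= b /\ Rabs (x - c) < r.
Proof.
  intros Hab Hr Hx. destruct (Rlt_le_dec x a); [|destruct (Rlt_le_dec b x)].
  - exists a. split; [lra|]. apply Rabs_lt_between'; lra.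
  - exists b. split; [lra|]. apply Rabs_lt_between'; lra.
  - exists x. split; [lra|]. rewrite Rminus_diag, Rabs_R0; lra.
Qed.

Definition uncurry4 (g : fun4) (q : R * (R * (R * R))) : R :=
  g (fst q) (fst (snd q)) (fst (snd (snd q))) (snd (snd (snd q))).

Lemma cont4_atP (g : fun4) u x y z :
  cont4_at g u x y z <-> continuous (uncurry4 g) (u, (x, (y, z))).
Proof.
  split.
  - intros Hg. apply filterlim_locally. intros eps.
    destruct (Hg eps (cond_pos eps)) as (d & Hd & H).
    exists (mkposreal d Hd). intros [u' [x' [y' z']]] (Hu & Hx & Hy & Hz).
    apply H; assumption.
  - intros Hg eps Heps.
    destruct (proj1 (filterlim_locally _ _) Hg (mkposreal eps Heps)) as [d Hd].
    exists d. split; [apply cond_pos|]. intros u' x' y' z' Hu Hx Hy Hz.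
    apply (Hd (u', (x', (y', z')))). repeat split; assumption.
Qed.

Lemma cont4_const c u x y z : cont4_at (fun _ _ _ _ => c) u x y z.
Proof. apply cont4_atP, continuous_const. Qed.

Lemma cont4_plus (f g : fun4) u x y z : cont4_at f u x y z -> cont4_at g u x y z ->
  cont4_at (fun a b c d => f a b c d + g a b c d) u x y z.
Proof.
  rewrite !cont4_atP. intros Hf Hg. apply (continuous_plus (uncurry4 f) (uncurry4 g)); assumption.
Qed.

Lemma cont4_opp (f : fun4) u x y z : cont4_at f u x y z ->
  cont4_at (fun a b c d => - f a b c d) u x y z.
Proof. rewrite !cont4_atP. apply (continuous_opp (uncurry4 f)). Qed.

Lemma cont4_minus (f g : fun4) u x y z : cont4_at f u x y z -> cont4_at g u x y z ->
  cont4_at (fun a b c d => f a b c d - g a b c d) u x y z.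
Proof.
  intros Hf Hg. apply (cont4_plus f (fun a b c d => - g a b c d)); [|apply cont4_opp]; assumption.
Qed.

Lemma cont4_mult (f g : fun4) u x y z : cont4_at f u x y z -> cont4_at g u x y z ->
  cont4_at (fun a b c d => f a b c d * g a b c d) u x y z.
Proof.
  rewrite !cont4_atP. intros Hf Hg. apply (continuous_mult (uncurry4 f) (uncurry4 g)); assumption.
Qed.

Lemma cont4_pow2 (f : fun4) u x y z : cont4_at f u x y z ->
  cont4_at (fun a b c d => f a b c d ^ 2) u x y z.
Proof.
  intros Hf. assert (H := cont4_mult f f u x y z Hf Hf).
  rewrite cont4_atP in *. revert H. apply continuous_ext. intros q. unfold uncurry4. simpl. ring.
Qed.

Lemma cont4_slice_y (k : fun4) u x y z : cont4_at k u x y z -> continuous (fun t => k u x t z) y.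
Proof.
  intros H. apply continuous_eps. intros e He. destruct (H e He) as (d & Hd & H').
  exists d; split; auto. intros t Ht. apply H'; auto; rewrite Rminus_diag, Rabs_R0; auto.
Qed.

Lemma cont4_slice_uy (k : fun4) u x y z : cont4_at k u x y z ->
  continuity_2d_pt (fun a b => k a x b z) u y.
Proof.
  intros H. apply continuity_2d_pt_eps. intros e He. destruct (H e He) as (d & Hd & H').
  exists d; split; auto. intros. apply H'; auto; rewrite Rminus_diag, Rabs_R0; auto.
Qed.

Lemma cont4_slice_xy (k : fun4) u x y z : cont4_at k u x y z ->
  continuity_2d_pt (fun a b => k u a b z) x y.
Proof.
  intros H. apply continuity_2d_pt_eps. intros e He. destruct (H e He) as (d & Hd & H').
  exists d; split; auto. intros. apply H'; auto; rewrite Rminus_diag, Rabs_R0; auto.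
Qed.

Definition swap_uz (k : fun4) : fun4 := fun a x y b => k b x y a.

Lemma cont4_swap_uz (k : fun4) u x y z : cont4_at k z x y u -> cont4_at (swap_uz k) u x y z.
Proof.
  intros H e He. destruct (H e He) as (d & Hd & H'). exists d; split; auto.
  intros. unfold swap_uz. apply H'; auto.
Qed.

Definition box4 d u x y z u' x' y' z' :=
  Rabs (u' - u) < d /\ Rabs (x' - x) < d /\ Rabs (y' - y) < d /\ Rabs (z' - z) < d.

Lemma box4_center d u x y z : 0 < d -> box4 d u x y z u x y z.
Proof. intros; unfold box4; rewrite !Rminus_diag, !Rabs_R0; repeat split; auto. Qed.

(** * Uniform radii on compact boxes *)

Lemma interval_uniform_radius (a b : R) (Phi : R -> R -> Prop) :
  (forall t e e', Phi t e -> 0 < e' <= e -> Phi t e') ->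
  (forall t, a <= t <= b -> exists e r, 0 < e /\ 0 < r /\
      forall t', a <= t' <= b -> Rabs (t' - t) < r -> Phi t' e) ->
  exists e, 0 < e /\ forall t, a <= t <= b -> Phi t e.
Proof.
  intros Hmon Hloc.
  destruct (Rle_lt_dec a b) as [Hab|Hab]; [|exists 1; split; [lra|intros; lra]].
  set (E := fun t => a <= t <= b /\ exists e, 0 < e /\ forall t', a <= t' <= t -> Phi t' e).
  assert (Ea : E a).
  { destruct (Hloc a) as (e & r & He & Hr & H); [lra|].
    split; [lra|]. exists e; split; auto. intros t' Ht'.
    apply H; [lra|]. replace (t' - a) with 0 by lra. rewrite Rabs_R0; lra. }
  assert (Hb : bound E). { exists b. intros t [Ht _]. lra. }
  (* [m] is the supremum of the points up to which one radius works; the local radius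
     at [m] carries the property beyond [m] unless [m = b]. *)
  destruct (completeness E Hb (ex_intro _ a Ea)) as [m [Hub Hlub]].
  assert (ham : a <= m) by (apply Hub; exact Ea).
  assert (hmb : m <= b) by (apply Hlub; intros t [Ht _]; lra).
  destruct (Hloc m) as (em & rm & Hem & Hrm & Hm); [lra|].
  assert (Ht1 : exists t1, E t1 /\ m - rm < t1).
  { apply NNPP. intro Hn.
    assert (m <= m - rm); [|lra].
    apply Hlub. intros t Et. apply Rnot_lt_le. intro Hlt. apply Hn. exists t; auto. }
  destruct Ht1 as (t1 & [Ht1 (e1 & He1 & H1)] & Hlt1).
  set (t2 := Rmin b (m + rm / 2)).
  assert (E2 : E t2).
  { split. { unfold t2; split; [apply Rmin_glb; lra|apply Rmin_l]. }
    exists (Rmin e1 em). split; [apply Rmin_pos; lra|].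
    intros t' Ht'.
    destruct (Rle_lt_dec t' t1).
    - apply Hmon with e1; [apply H1; lra|]. split; [apply Rmin_pos; lra|apply Rmin_l].
    - apply Hmon with em; [|split; [apply Rmin_pos; lra|apply Rmin_r]].
      assert (t2 <= b) by apply Rmin_l. assert (t2 <= m + rm/2) by apply Rmin_r.
      apply Hm; [lra|]. apply Rabs_def1; lra. }
  assert (t2 <= m) by (apply Hub; exact E2).
  assert (t2 = b).
  { unfold t2 in *. destruct (Rle_lt_dec b (m + rm/2)).
    rewrite Rmin_left; auto. rewrite Rmin_right in H; lra. }
  destruct E2 as [_ (e & He & H2)]. exists e; split; auto.
  intros t Ht; apply H2; lra.
Qed.

(* Compactness of [B] in Lebesgue-number form: a property of radii that is monotone and
   holds locally around every point of [B] holds with a single radius on all of [B]. *)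
Definition uniform_radius {X : Type} (B : X -> Prop) (N : R -> X -> X -> Prop) :=
  forall Phi : X -> R -> Prop,
  (forall p e e', Phi p e -> 0 < e' <= e -> Phi p e') ->
  (forall p, B p -> exists e r, 0 < e /\ 0 < r /\
      forall p', B p' -> N r p p' -> Phi p' e) ->
  exists e, 0 < e /\ forall p, B p -> Phi p e.

Lemma uniform_radius_interval (a b : R) :
  uniform_radius (fun t => a <= t <= b) (fun r t t' => Rabs (t' - t) < r).
Proof. intros Phi Hm Hl. apply interval_uniform_radius; auto. Qed.

Lemma uniform_radius_prod {X : Type} (B : X -> Prop) N (a b : R) :
  uniform_radius B N ->
  uniform_radius (fun q : R * X => a <= fst q <= b /\ B (snd q))
     (fun r q q' => Rabs (fst q' - fst q) < r /\ N r (snd q) (snd q')).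
Proof.
  intros HU Phi Hmon Hloc.
  destruct (interval_uniform_radius a b (fun t e => forall p, B p -> Phi (t, p) e)) as (e & He & H).
  - intros t e e' H1 H2 p Hp. eapply Hmon; eauto.
  - intros t0 Ht0.
    destruct (HU (fun p e => forall t', a <= t' <= b -> Rabs (t' - t0) < e -> Phi (t', p) e))
      as (e' & He' & H').
    + intros p e e' H1 H2 t' Ht' Ht''. eapply Hmon; [apply H1; auto; lra|auto].
    + intros p0 Hp0.
      destruct (Hloc (t0, p0)) as (e & r & He & Hr & Hl); [simpl; auto|].
      exists (Rmin e r), r. split; [apply Rmin_pos; auto|]. split; auto.
      intros p' Hp' HN t' Ht' Ht''.
      assert (Rmin e r <= r) by apply Rmin_r.
      eapply Hmon; [apply (Hl (t', p')); simpl; auto; split; auto; lra|].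
      split; [apply Rmin_pos; auto|apply Rmin_l].
    + exists e', e'. refine (conj He' (conj He' _)).
      intros t' Ht' Hd p Hp. apply (H' p Hp t'); auto.
  - exists e; split; auto. intros [t p] [Ht Hp]; simpl in *. apply H; auto.
Qed.

Lemma uniform_close_on_interval {X : Type} (D : R -> X -> Prop) (k : X -> R -> R) q0 a b :
  (forall e e' q, D e' q -> e' <= e -> D e q) ->
  (forall e, 0 < e -> D e q0) ->
  (forall y, a <= y <= b -> forall e, 0 < e -> exists d, 0 < d /\
      forall q y', D d q -> Rabs (y' - y) < d -> Rabs (k q y' - k q0 y) < e) ->
  forall e, 0 < e -> exists d, 0 < d /\ forall q, D d q -> forall y, a <= y <= b ->
      Rabs (k q y - k q0 y) < e.
Proof.
  intros Hmon Hq0 H e He.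
  destruct (interval_uniform_radius a b (fun y d => forall q, D d q -> Rabs (k q y - k q0 y) < e))
    as (d & Hd & H').
  - intros y d d' H1 [H2 H3] q Hq. apply H1. eapply Hmon; eauto.
  - intros y Hy. destruct (H y Hy (e/2)) as (d & Hd & Hd'); [lra|].
    exists d, d. split; auto. split; auto. intros y' Hy' Hyy q Hq.
    assert (A := Hd' q y' Hq Hyy). assert (B := Hd' q0 y' (Hq0 d Hd) Hyy).
    replace (k q y' - k q0 y') with ((k q y' - k q0 y) - (k q0 y' - k q0 y)) by ring.
    eapply Rle_lt_trans; [apply Rabs_triang|]. rewrite Rabs_Ropp. lra.
  - exists d; split; [exact Hd|]. intros q Hq y Hy. apply (H' y Hy q Hq).
Qed.

Lemma wedge_uniform_box (T Lx Ly : R) (Good : R -> R -> R -> R -> Prop) :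
  (forall u x y z, in_wedge T u z -> exists d, 0 < d /\
     forall u' x' y' z', box4 d u x y z u' x' y' z' -> Good u' x' y' z') ->
  exists eta, 0 < eta /\ forall u x y z, in_wedge T u z -> 0 <= x <= Lx -> 0 <= y <= Ly ->
     forall u' x' y' z', box4 eta u x y z u' x' y' z' -> Good u' x' y' z'.
Proof.
  intros HG.
  pose proof (uniform_radius_prod _ _ 0 T (uniform_radius_prod _ _ 0 Lx
                (uniform_radius_prod _ _ 0 Ly (uniform_radius_interval 0 T)))) as HU.
  destruct (HU (fun q e => in_wedge T (fst q) (snd (snd (snd q))) ->
     forall u' x' y' z', box4 e (fst q) (fst (snd q)) (fst (snd (snd q))) (snd (snd (snd q)))
        u' x' y' z' -> Good u' x' y' z')) as (eta & Heta & H).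
  - intros q e e' H1 H2 Hw u' x' y' z' Hb. apply H1; auto.
    destruct Hb as (A & B & C & D). unfold box4; repeat split; lra.
  - intros [u [x [y z]]] Hq; simpl in *.
    destruct (Rle_lt_dec (u + z) T).
    + destruct (HG u x y z) as (d & Hd & Hd'); [unfold in_wedge; lra|].
      exists (d/2), (d/2). split; [lra|]. split; [lra|].
      intros [u1 [x1 [y1 z1]]] _ HN Hw u' x' y' z' Hb; simpl in *.
      destruct HN as (A & B & C & D). destruct Hb as (A' & B' & C' & D').
      apply Hd'. apply Rabs_lt_between' in A, B, C, D, A', B', C', D'.
      unfold box4; repeat split; apply Rabs_lt_between'; lra.
    + (* outside the wedge the property is vacuous *)
      exists 1, ((u + z - T)/2). split; [lra|]. split; [lra|].
      intros [u1 [x1 [y1 z1]]] _ HN Hw; simpl in *.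
      destruct HN as (A & B & C & D). unfold in_wedge in Hw.
      apply Rabs_lt_between' in A, D. lra.
  - exists eta. split; auto. intros u x y z Hw Hx Hy u' x' y' z' Hb.
    apply (H (u, (x, (y, z)))); simpl; auto.
    unfold in_wedge in Hw. repeat split; lra.
Qed.

(** * Integrals over a period cell *)

Section CellIntegrals.
Variable Reg : R -> R -> R -> R -> Prop.
Variables Lx Ly : R.
Hypothesis hLx : 0 < Lx.
Hypothesis hLy : 0 < Ly.

Definition cell_nbhd u0 z0 r : Prop := forall u x y z, Rabs (u - u0) < r -> Rabs (z - z0) < r ->
  -r < x < Lx + r -> -r < y < Ly + r -> Reg u x y z.

Definition int_y (k : fun4) u x z := RInt (fun y => k u x y z) 0 Ly.
Definition int_cell (k : fun4) u z := int_xy Lx Ly (fun x y => k u x y z).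

Lemma cell_nbhd_shrink u0 z0 rho u x z : 0 < rho -> cell_nbhd u0 z0 rho ->
  Rabs (u - u0) < rho/2 -> Rabs (z - z0) < rho/2 -> -rho/2 < x < Lx + rho/2 ->
  forall u' x' y z', Rabs (u' - u) < rho/2 -> Rabs (x' - x) < rho/2 -> Rabs (z' - z) < rho/2 ->
  0 <= y <= Ly -> Reg u' x' y z'.
Proof.
  intros Hr Hs Hu Hz Hx u' x' y z' H1 H2 H3 Hy.
  apply Rabs_lt_between' in Hu, Hz, H1, H2, H3.
  apply Hs; try (apply Rabs_lt_between'); lra.
Qed.

Section Continuity.
Variable k : fun4.
Hypothesis Hk : forall u x y z, Reg u x y z -> cont4_at k u x y z.

Lemma int_y_cont u0 x0 z0 rho : 0 < rho ->
  (forall u x y z, Rabs (u - u0) < rho -> Rabs (x - x0) < rho -> Rabs (z - z0) < rho ->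
     0 <= y <= Ly -> Reg u x y z) ->
  forall e, 0 < e -> exists d, 0 < d /\ forall u x z, Rabs (u - u0) < d -> Rabs (x - x0) < d ->
    Rabs (z - z0) < d -> Rabs (int_y k u x z - int_y k u0 x0 z0) < e.
Proof.
  intros Hr HG e He.
  set (D := fun d (q : R * (R * R)) => Rabs (fst q - u0) < d /\ Rabs (fst (snd q) - x0) < d /\
                                      Rabs (snd (snd q) - z0) < d).
  set (kk := fun (q : R * (R * R)) y => k (fst q) (fst (snd q)) y (snd (snd q))).
  destruct (uniform_close_on_interval D kk (u0, (x0, z0)) 0 Ly) with (e := e / (2 * Ly))
    as (d1 & Hd1 & H1).
  - intros a b q [A [B C]] Hab; repeat split; lra.
  - intros a Ha; unfold D; simpl; rewrite !Rminus_diag, Rabs_R0; repeat split; auto.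
  - intros y Hy a Ha. destruct (Hk u0 x0 y z0) with (eps := a) as (d & Hd & H); auto.
    { apply HG; auto; rewrite Rminus_diag, Rabs_R0; auto. }
    exists d; split; auto. intros [u [x z]] y' [A [B C]] Hyy; simpl in *. unfold kk; simpl.
    apply H; auto.
  - apply Rdiv_lt_0_compat; lra.
  - exists (Rmin d1 rho). split; [apply Rmin_pos; auto|].
    intros u x z Hu Hx Hz.
    pose proof (Rmin_l d1 rho). pose proof (Rmin_r d1 rho).
    eapply Rle_lt_trans.
    + apply (abs_RInt_minus_le _ _ 0 Ly (e / (2 * Ly))); [lra| | |].
      * apply ex_RInt_continuousR. intros t Ht. rewrite Rmin_left, Rmax_right in Ht; try lra.
        apply cont4_slice_y. apply Hk. apply HG; auto; lra.
      * apply ex_RInt_continuousR. intros t Ht. rewrite Rmin_left, Rmax_right in Ht; try lra.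
        apply cont4_slice_y. apply Hk. apply HG; auto; rewrite Rminus_diag, Rabs_R0; auto.
      * intros y Hy. apply (H1 (u, (x, z))); auto. unfold D; simpl; repeat split; lra.
    + replace ((Ly - 0) * (e / (2 * Ly))) with (e / 2) by (field; lra). lra.
Qed.

Lemma int_y_continuous_x u x z rho : 0 < rho ->
  (forall u' x' y z', Rabs (u' - u) < rho -> Rabs (x' - x) < rho -> Rabs (z' - z) < rho ->
     0 <= y <= Ly -> Reg u' x' y z') ->
  continuous (fun t => int_y k u t z) x.
Proof.
  intros Hr HG. apply continuous_eps. intros e He.
  destruct (int_y_cont u x z rho Hr HG e He) as (d & Hd & H).
  exists d; split; auto. intros t Ht. apply H; auto; rewrite Rminus_diag, Rabs_R0; auto.
Qed.

Lemma ex_RInt_int_y u0 z0 rho u z : 0 < rho -> cell_nbhd u0 z0 rho ->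
  Rabs (u - u0) < rho/2 -> Rabs (z - z0) < rho/2 -> ex_RInt (fun x => int_y k u x z) 0 Lx.
Proof.
  intros Hr Hs Hu Hz. apply ex_RInt_continuousR. intros t Ht.
  rewrite Rmin_left, Rmax_right in Ht; try lra.
  apply (int_y_continuous_x u t z (rho/2)); [lra|].
  apply (cell_nbhd_shrink u0 z0 rho); auto. lra.
Qed.

Lemma int_cell_continuity_2d u0 z0 rho : 0 < rho -> cell_nbhd u0 z0 rho ->
  continuity_2d_pt (int_cell k) u0 z0.
Proof.
  intros Hr Hs. apply continuity_2d_pt_eps. intros e He.
  set (D := fun d (q : R * R) => Rabs (fst q - u0) < d /\ Rabs (snd q - z0) < d).
  set (kk := fun (q : R * R) x => int_y k (fst q) x (snd q)).
  destruct (uniform_close_on_interval D kk (u0, z0) 0 Lx) with (e := e / (2 * Lx))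
    as (d1 & Hd1 & H1).
  - intros a b q [A B] Hab; split; lra.
  - intros a Ha; unfold D; simpl; rewrite !Rminus_diag, Rabs_R0; split; auto.
  - intros x Hx a Ha.
    destruct (int_y_cont u0 x z0 (rho/2)) with (e := a) as (d & Hd & H); auto; [lra| |].
    { apply (cell_nbhd_shrink u0 z0 rho); auto; try rewrite Rminus_diag, Rabs_R0; lra. }
    exists d; split; auto. intros [u z] x' [A B] Hxx; simpl in *. unfold kk; simpl.
    apply H; auto.
  - apply Rdiv_lt_0_compat; lra.
  - exists (Rmin d1 (rho/2)). split; [apply Rmin_pos; lra|].
    intros u z Hu Hz.
    pose proof (Rmin_l d1 (rho/2)). pose proof (Rmin_r d1 (rho/2)).
    eapply Rle_lt_trans.
    + apply (abs_RInt_minus_le (fun x => int_y k u x z) (fun x => int_y k u0 x z0) 0 Lx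
               (e / (2 * Lx)));
        [lra| | |].
      * apply (ex_RInt_int_y u0 z0 rho); auto; lra.
      * apply (ex_RInt_int_y u0 z0 rho); auto; rewrite Rminus_diag, Rabs_R0; lra.
      * intros x Hx. apply (H1 (u, z)); auto. unfold D; simpl; split; lra.
    + replace ((Lx - 0) * (e / (2 * Lx))) with (e / 2) by (field; lra). lra.
Qed.

End Continuity.

Section Derivatives.
Variables k dk : fun4.
Hypothesis Hk : forall u x y z, Reg u x y z -> cont4_at k u x y z.
Hypothesis Hdk : forall u x y z, Reg u x y z -> cont4_at dk u x y z.

Section DerivativeU.
Hypothesis Hd : forall u x y z, Reg u x y z -> is_derive (fun t => k t x y z) u (dk u x y z).

Lemma is_derive_int_y_u u0 x0 z0 r : 0 < r ->
  (forall u y, Rabs (u - u0) < r -> -r < y < Ly + r -> Reg u x0 y z0) ->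
  is_derive (fun u => int_y k u x0 z0) u0 (int_y dk u0 x0 z0).
Proof.
  intros Hr HG. unfold int_y.
  apply (is_derive_RInt_param_box (fun p y => k p x0 y z0) (fun p y => dk p x0 y z0) u0 0 Ly r);
    auto; try lra.
  - intros p y Hp Hy. apply Hd. apply HG; auto; lra.
  - intros p y Hp Hy. apply cont4_slice_uy. apply Hdk. apply HG; auto; lra.
  - intros p y Hp Hy. apply cont4_slice_uy. apply Hk. apply HG; auto; lra.
Qed.

Lemma is_derive_int_cell_u u0 z0 rho : 0 < rho -> cell_nbhd u0 z0 rho ->
  is_derive (fun u => int_cell k u z0) u0 (int_cell dk u0 z0).
Proof.
  intros Hr Hs. unfold int_cell, int_xy.
  apply (is_derive_RInt_param_box (fun p x => int_y k p x z0) (fun p x => int_y dk p x z0)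
           u0 0 Lx (rho/2));
    try lra.
  - intros p x Hp Hx. apply (is_derive_int_y_u p x z0 (rho/2)); [lra|].
    intros u y Hu Hy. apply Rabs_lt_between' in Hp, Hu. apply Hs; try apply Rabs_lt_between';
      rewrite ?Rminus_diag, ?Rabs_R0; lra.
  - intros p x Hp Hx. apply continuity_2d_pt_eps. intros e He.
    destruct (int_y_cont dk Hdk p x z0 (rho/2)) with (e := e) as (d & Hd' & H); auto; [lra| |].
    { apply (cell_nbhd_shrink u0 z0 rho); auto; rewrite ?Rminus_diag, ?Rabs_R0; lra. }
    exists d; split; auto. intros a b Ha Hb. apply H; auto; rewrite Rminus_diag, Rabs_R0; auto.
  - intros p x Hp Hx. apply continuity_2d_pt_eps. intros e He.
    destruct (int_y_cont k Hk p x z0 (rho/2)) with (e := e) as (d & Hd' & H); auto; [lra| |].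
    { apply (cell_nbhd_shrink u0 z0 rho); auto; rewrite ?Rminus_diag, ?Rabs_R0; lra. }
    exists d; split; auto. intros a b Ha Hb. apply H; auto; rewrite Rminus_diag, Rabs_R0; auto.
Qed.
End DerivativeU.

Lemma int_cell_dx_periodic_eq0 u0 z0 rho : 0 < rho -> cell_nbhd u0 z0 rho ->
  (forall u x y z, Reg u x y z -> is_derive (fun t => k u t y z) x (dk u x y z)) ->
  (forall y, k u0 Lx y z0 = k u0 0 y z0) ->
  int_cell dk u0 z0 = 0.
Proof.
  intros Hr Hs Hd Hper. unfold int_cell, int_xy.
  assert (HI : is_RInt (fun x => int_y dk u0 x z0) 0 Lx
                 (minus (int_y k u0 Lx z0) (int_y k u0 0 z0))).
  { apply (is_RInt_derive (fun x => int_y k u0 x z0)).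
    - intros x Hx. rewrite Rmin_left, Rmax_right in Hx; try lra. unfold int_y.
      apply (is_derive_RInt_param_box (fun p y => k u0 p y z0) (fun p y => dk u0 p y z0)
               x 0 Ly (rho/2));
        try lra.
      + intros p y Hp Hy. apply Hd. apply Rabs_lt_between' in Hp. apply Hs;
          rewrite ?Rminus_diag, ?Rabs_R0; lra.
      + intros p y Hp Hy. apply cont4_slice_xy. apply Hdk. apply Rabs_lt_between' in Hp. apply Hs;
          rewrite ?Rminus_diag, ?Rabs_R0; lra.
      + intros p y Hp Hy. apply cont4_slice_xy. apply Hk. apply Rabs_lt_between' in Hp. apply Hs;
          rewrite ?Rminus_diag, ?Rabs_R0; lra.
    - intros x Hx. rewrite Rmin_left, Rmax_right in Hx; try lra.
      apply (int_y_continuous_x dk Hdk u0 x z0 (rho/2)); [lra|].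
      apply (cell_nbhd_shrink u0 z0 rho); auto; rewrite ?Rminus_diag, ?Rabs_R0; lra. }
  apply is_RInt_unique in HI. simpl in HI. change (RInt (fun x => int_y dk u0 x z0) 0 Lx = 0).
  rewrite HI.
  unfold int_y. rewrite (RInt_ext (fun y => k u0 Lx y z0) (fun y => k u0 0 y z0)).
  - unfold minus, plus, opp; simpl; ring.
  - intros; apply Hper.
Qed.

Lemma int_cell_dy_periodic_eq0 u0 z0 rho : 0 < rho -> cell_nbhd u0 z0 rho ->
  (forall u x y z, Reg u x y z -> is_derive (fun t => k u x t z) y (dk u x y z)) ->
  (forall x, k u0 x Ly z0 = k u0 x 0 z0) ->
  int_cell dk u0 z0 = 0.
Proof.
  intros Hr Hs Hd Hper. unfold int_cell, int_xy.
  rewrite (RInt_ext _ (fun _ => 0)).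
  - rewrite RInt_const. unfold scal; simpl; unfold mult; simpl; ring.
  - intros x Hx. rewrite Rmin_left, Rmax_right in Hx; try lra.
    assert (HI : is_RInt (fun y => dk u0 x y z0) 0 Ly (minus (k u0 x Ly z0) (k u0 x 0 z0))).
    2:{ apply is_RInt_uniqueR in HI. rewrite HI, Hper. unfold minus, plus, opp; simpl; ring. }
    apply (is_RInt_derive (fun y => k u0 x y z0)).
    + intros y Hy. rewrite Rmin_left, Rmax_right in Hy; try lra. apply Hd.
      apply Hs; rewrite ?Rminus_diag, ?Rabs_R0; lra.
    + intros y Hy. rewrite Rmin_left, Rmax_right in Hy; try lra. apply cont4_slice_y. apply Hdk.
      apply Hs; rewrite ?Rminus_diag, ?Rabs_R0; lra.
Qed.
End Derivatives.

Lemma int_y_plus (k1 k2 : fun4) u x z :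
  (forall y, 0 <= y <= Ly -> cont4_at k1 u x y z /\ cont4_at k2 u x y z) ->
  int_y (fun a b c d => k1 a b c d + k2 a b c d) u x z = int_y k1 u x z + int_y k2 u x z.
Proof.
  intros H. unfold int_y.
  apply (RInt_plus (V := R_CompleteNormedModule) (fun y => k1 u x y z) (fun y => k2 u x y z));
   apply ex_RInt_continuousR; intros t Ht; rewrite Rmin_left, Rmax_right in Ht; try lra;
   apply cont4_slice_y; apply H; auto.
Qed.

Lemma int_cell_plus (k1 k2 : fun4) u0 z0 rho :
  (forall u x y z, Reg u x y z -> cont4_at k1 u x y z) ->
  (forall u x y z, Reg u x y z -> cont4_at k2 u x y z) ->
  0 < rho -> cell_nbhd u0 z0 rho ->
  int_cell (fun a b c d => k1 a b c d + k2 a b c d) u0 z0 = int_cell k1 u0 z0 + int_cell k2 u0 z0.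
Proof.
  intros H1 H2 Hr Hs. unfold int_cell, int_xy.
  change (RInt (fun x => int_y (fun a b c d => k1 a b c d + k2 a b c d) u0 x z0) 0 Lx =
          RInt (fun x => int_y k1 u0 x z0) 0 Lx + RInt (fun x => int_y k2 u0 x z0) 0 Lx).
  rewrite (RInt_ext _ (fun x => int_y k1 u0 x z0 + int_y k2 u0 x z0)).
  - apply (RInt_plus (V := R_CompleteNormedModule) (fun x => int_y k1 u0 x z0)
             (fun x => int_y k2 u0 x z0)).
    + apply (ex_RInt_int_y k1 H1 u0 z0 rho); auto; rewrite Rminus_diag, Rabs_R0; lra.
    + apply (ex_RInt_int_y k2 H2 u0 z0 rho); auto; rewrite Rminus_diag, Rabs_R0; lra.
  - intros x Hx. rewrite Rmin_left, Rmax_right in Hx; try lra.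
    apply int_y_plus. intros y Hy.
    split; [apply H1|apply H2]; apply Hs; rewrite ?Rminus_diag, ?Rabs_R0; lra.
Qed.

Lemma int_cell_scal (c : R) (k : fun4) u0 z0 rho :
  (forall u x y z, Reg u x y z -> cont4_at k u x y z) ->
  0 < rho -> cell_nbhd u0 z0 rho ->
  int_cell (fun a b c' d => c * k a b c' d) u0 z0 = c * int_cell k u0 z0.
Proof.
  intros H1 Hr Hs. unfold int_cell, int_xy.
  change (RInt (fun x => int_y (fun a b c' d => c * k a b c' d) u0 x z0) 0 Lx =
          c * RInt (fun x => int_y k u0 x z0) 0 Lx).
  rewrite (RInt_ext _ (fun x => c * int_y k u0 x z0)).
  - apply (RInt_scal (V := R_CompleteNormedModule) (fun x => int_y k u0 x z0)).
    apply (ex_RInt_int_y k H1 u0 z0 rho); auto; rewrite Rminus_diag, Rabs_R0; lra.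
  - intros x Hx. rewrite Rmin_left, Rmax_right in Hx; try lra. unfold int_y.
    apply (RInt_scal (V := R_CompleteNormedModule) (fun y => k u0 x y z0)).
    apply ex_RInt_continuousR; intros t Ht; rewrite Rmin_left, Rmax_right in Ht; try lra.
    apply cont4_slice_y. apply H1. apply Hs; rewrite ?Rminus_diag, ?Rabs_R0; lra.
Qed.

Lemma int_cell_le (k1 k2 : fun4) u0 z0 rho :
  (forall u x y z, Reg u x y z -> cont4_at k1 u x y z) ->
  (forall u x y z, Reg u x y z -> cont4_at k2 u x y z) ->
  0 < rho -> cell_nbhd u0 z0 rho ->
  (forall x y, 0 <= x <= Lx -> 0 <= y <= Ly -> k1 u0 x y z0 <= k2 u0 x y z0) ->
  int_cell k1 u0 z0 <= int_cell k2 u0 z0.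
Proof.
  intros H1 H2 Hr Hs Hle. unfold int_cell, int_xy.
  change (RInt (fun x => int_y k1 u0 x z0) 0 Lx <= RInt (fun x => int_y k2 u0 x z0) 0 Lx).
  apply RInt_le; try lra.
  - apply (ex_RInt_int_y k1 H1 u0 z0 rho); auto; rewrite Rminus_diag, Rabs_R0; lra.
  - apply (ex_RInt_int_y k2 H2 u0 z0 rho); auto; rewrite Rminus_diag, Rabs_R0; lra.
  - intros x Hx. unfold int_y. apply RInt_le; try lra.
    + apply ex_RInt_continuousR; intros t Ht; rewrite Rmin_left, Rmax_right in Ht; try lra.
      apply cont4_slice_y. apply H1. apply Hs; rewrite ?Rminus_diag, ?Rabs_R0; lra.
    + apply ex_RInt_continuousR; intros t Ht; rewrite Rmin_left, Rmax_right in Ht; try lra.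
      apply cont4_slice_y. apply H2. apply Hs; rewrite ?Rminus_diag, ?Rabs_R0; lra.
    + intros y Hy. apply Hle; lra.
Qed.

Lemma int_cell_ext (k1 k2 : fun4) u z :
  (forall x y, 0 < x < Lx -> 0 < y < Ly -> k1 u x y z = k2 u x y z) ->
  int_cell k1 u z = int_cell k2 u z.
Proof.
  intros H. unfold int_cell, int_xy. apply RInt_ext. intros x Hx.
  rewrite Rmin_left, Rmax_right in Hx; try lra.
  apply RInt_ext. intros y Hy. rewrite Rmin_left, Rmax_right in Hy; try lra. apply H; assumption.
Qed.

End CellIntegrals.

Lemma is_derive_int_cell_z (Reg : R -> R -> R -> R -> Prop) Lx Ly (hLx : 0 < Lx) (hLy : 0 < Ly)
  (k dk : fun4) :
  (forall u x y z, Reg u x y z -> cont4_at k u x y z) ->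
  (forall u x y z, Reg u x y z -> cont4_at dk u x y z) ->
  (forall u x y z, Reg u x y z -> is_derive (fun t => k u x y t) z (dk u x y z)) ->
  forall u0 z0 rho, 0 < rho -> cell_nbhd Reg Lx Ly u0 z0 rho ->
  is_derive (fun z => int_cell Lx Ly k u0 z) z0 (int_cell Lx Ly dk u0 z0).
Proof.
  intros Hk Hdk Hd u0 z0 rho Hr Hs.
  apply (is_derive_int_cell_u (fun a x y b => Reg b x y a) Lx Ly hLx hLy (swap_uz k) (swap_uz dk))
    with (rho := rho).
  - intros; apply cont4_swap_uz; auto.
  - intros; apply cont4_swap_uz; auto.
  - intros; apply Hd; auto.
  - exact Hr.
  - intros u x y z H1 H2 H3 H4. apply Hs; auto.
Qed.

(** * Flux balance on a triangle *)

Definition in_open_wedge (T u z : R) : Prop := 0 < u /\ 0 < z /\ u + z < T.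

Lemma continuity_2d_pt_shear (f : R -> R -> R) u0 v0 :
  continuity_2d_pt f (u0 - v0) v0 -> continuity_2d_pt (fun u v => f (u - v) v) u0 v0.
Proof.
  intros H. apply continuity_2d_pt_eps. intros e He. destruct (H (mkposreal e He)) as [d Hd].
  exists (d/2). split; [apply Rlt_gt, Rdiv_lt_0_compat; [apply cond_pos|lra]|].
  intros u v Hu Hv. apply Hd; auto; [|pose proof (cond_pos d); lra].
  replace (u - v - (u0 - v0)) with ((u - u0) - (v - v0)) by ring.
  eapply Rle_lt_trans; [apply Rabs_triang|]. rewrite Rabs_Ropp. lra.
Qed.

Lemma continuous_antidiag (f : R -> R -> R) c t0 :
  continuity_2d_pt f (c - t0) t0 -> continuous (fun t => f (c - t) t) t0.
Proof.
  intros H. apply continuous_eps. intros e He. destruct (H (mkposreal e He)) as [d Hd].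
  exists (d/2). split; [apply Rdiv_lt_0_compat; [apply cond_pos|lra]|].
  intros t Ht. apply Hd; [|pose proof (cond_pos d); lra].
  replace (c - t - (c - t0)) with (- (t - t0)) by ring. rewrite Rabs_Ropp.
  pose proof (cond_pos d); lra.
Qed.

Lemma continuity_2d_pt_snd (f : R -> R -> R) x y :
  continuity_2d_pt f x y -> continuous (fun t => f x t) y.
Proof.
  intros H. apply continuous_eps. intros e He. destruct (H (mkposreal e He)) as [d Hd].
  exists d. split; [apply cond_pos|]. intros t Ht. apply Hd; auto.
  rewrite Rminus_diag, Rabs_R0; apply cond_pos.
Qed.

Lemma continuity_2d_pt_fst (f : R -> R -> R) x y :
  continuity_2d_pt f x y -> continuous (fun t => f t y) x.
Proof.
  intros H. apply continuous_eps. intros e He. destruct (H (mkposreal e He)) as [d Hd].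
  exists d. split; [apply cond_pos|]. intros t Ht. apply Hd; auto.
  rewrite Rminus_diag, Rabs_R0; apply cond_pos.
Qed.

Lemma is_derive_shift (f : R -> R -> R) x0 t l :
  is_derive (fun u => f u t) (x0 - t) l -> is_derive (fun u => f (u - t) t) x0 l.
Proof.
  intros H.
  assert (Hg : is_derive (fun u : R => u - t) x0 1) by (auto_derive; [auto|ring]).
  pose proof (is_derive_comp (fun u => f u t) (fun u => u - t) x0 l 1 H Hg) as H2.
  replace l with (scal 1 l) by (unfold scal; simpl; unfold mult; simpl; ring).
  exact H2.
Qed.

Section TriangleFlux.
Variables (T rho : R) (Near : R -> R -> Prop) (a b au bu bz : R -> R -> R).
Hypothesis hT : 0 < T.
Hypothesis hr : 0 < rho.
Hypothesis HS : forall u' z', in_wedge T u' z' -> forall u z,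
  Rabs (u - u') < rho -> Rabs (z - z') < rho -> Near u z.
Hypothesis Hca : forall u z, Near u z -> continuity_2d_pt a u z.
Hypothesis Hcb : forall u z, Near u z -> continuity_2d_pt b u z.
Hypothesis Hcau : forall u z, Near u z -> continuity_2d_pt au u z.
Hypothesis Hcbu : forall u z, Near u z -> continuity_2d_pt bu u z.
Hypothesis Hcbz : forall u z, Near u z -> continuity_2d_pt bz u z.
Hypothesis Hda : forall u z, Near u z -> is_derive (fun t => a t z) u (au u z).
Hypothesis Hdb : forall u z, Near u z -> is_derive (fun t => b t z) u (bu u z).
Hypothesis Hdbz : forall u z, Near u z -> is_derive (fun t => b u t) z (bz u z).
Hypothesis Hbal : forall u z, in_open_wedge T u z -> au u z + bz u z = 0.

Lemma near_triangle s s' t : 0 <= s <= T -> Rabs (s' - s) < rho/4 -> -rho/4 < t < s + rho/4 ->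
  Near (s' - t) t.
Proof.
  intros Hs Hs' Ht. apply Rabs_lt_between' in Hs'.
  destruct (Rlt_le_dec t 0).
  - apply (HS s 0); [unfold in_wedge; lra| |]; apply Rabs_lt_between'; lra.
  - destruct (Rlt_le_dec s t).
    + apply (HS 0 s); [unfold in_wedge; lra| |]; apply Rabs_lt_between'; lra.
    + apply (HS (s - t) t); [unfold in_wedge; lra| |]; apply Rabs_lt_between'; lra.
Qed.

Lemma near_axes t : -rho/2 < t < T + rho/2 -> Near 0 t /\ Near t 0.
Proof.
  intros Ht. destruct (Rlt_le_dec t 0); [|destruct (Rlt_le_dec T t)].
  - split; [apply (HS 0 0)|apply (HS 0 0)]; try (unfold in_wedge; lra);
      apply Rabs_lt_between'; lra.
  - split; [apply (HS 0 T)|apply (HS T 0)]; try (unfold in_wedge; lra);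
      apply Rabs_lt_between'; lra.
  - split; [apply (HS 0 t)|apply (HS t 0)]; try (unfold in_wedge; lra);
      apply Rabs_lt_between'; lra.
Qed.

Definition diag_sum s t := a (s - t) t + b (s - t) t.
Definition diag_sum_du s t := au (s - t) t + bu (s - t) t.

Lemma is_derive_diag_sum s t :
  Near (s - t) t -> is_derive (fun u => diag_sum u t) s (diag_sum_du s t).
Proof.
  intros H. unfold diag_sum, diag_sum_du.
  apply is_derive_plusR; apply (is_derive_shift (fun u v => _ u v)).
  - apply Hda; auto.
  - apply Hdb; auto.
Qed.

Lemma diag_sum_continuous s t : Near (s - t) t -> continuous (fun t => diag_sum s t) t.
Proof.
  intros H. unfold diag_sum.
  apply continuous_plusR; apply (continuous_antidiag (fun u v => _ u v)); auto.
Qed.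

Lemma ex_RInt_diag_sum s y c d : 0 <= s <= T -> Rabs (y - s) < rho/4 ->
  (forall t, Rmin c d <= t <= Rmax c d -> -rho/4 < t < s + rho/4) ->
  ex_RInt (fun t => diag_sum y t) c d.
Proof.
  intros Hs Hy Hcd. apply ex_RInt_continuousR. intros t Ht. apply diag_sum_continuous.
  apply (near_triangle s); auto.
Qed.

Lemma diag_sum_du_continuity s s' t :
  0 <= s <= T -> Rabs (s' - s) < rho/8 -> -rho/8 < t < s + rho/8 ->
  continuity_2d_pt (fun u v => Derive (fun z => diag_sum z v) u) s' t.
Proof.
  intros Hs Hs' Ht.
  apply continuity_2d_pt_ext_loc with (f := diag_sum_du).
  - exists (mkposreal (rho/16) ltac:(lra)). intros u v Hu Hv; simpl in *.
    symmetry. apply is_derive_unique. apply is_derive_diag_sum. apply (near_triangle s); auto.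
    + apply Rabs_lt_between' in Hu, Hs'. apply Rabs_lt_between'; lra.
    + apply Rabs_lt_between' in Hv. lra.
  - unfold diag_sum_du.
    apply continuity_2d_pt_plus; apply (continuity_2d_pt_shear (fun u v => _ u v));
      [apply Hcau|apply Hcbu]; apply (near_triangle s); auto; lra.
Qed.

Lemma is_derive_diag_integral s : 0 <= s <= T ->
  is_derive (fun s0 => RInt (fun t => diag_sum s0 t) 0 s0) s
    (RInt (fun t => Derive (fun u => diag_sum u t) s) 0 s + diag_sum s s * 1).
Proof.
  intros Hs.
  apply (is_derive_RInt_param_bound_comp_aux3 diag_sum 0 (fun x => x) s 1).
  - exists (mkposreal (rho/4) ltac:(lra)). intros y Hy. apply ball_Rabs in Hy.
    apply (ex_RInt_diag_sum s); auto. intros t Ht.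
    rewrite Rmin_left, Rmax_right in Ht; lra.
  - exists (mkposreal (rho/8) ltac:(lra)). exists (mkposreal (rho/8) ltac:(lra)).
    intros y Hy. apply ball_Rabs in Hy. simpl in *.
    apply (ex_RInt_diag_sum s); [auto|lra|]. intros t Ht.
    rewrite Rmin_left, Rmax_right in Ht; lra.
  - apply (is_derive_id (K := R_AbsRing)).
  - exists (mkposreal (rho/8) ltac:(lra)). exists (mkposreal (rho/8) ltac:(lra)).
    intros x0 Hx0 t Ht. apply ball_Rabs in Hx0. simpl in *.
    assert (-rho/8 <= t <= s + rho/8).
    { split.
      - eapply Rle_trans; [|apply Ht]. apply Rmin_case; lra.
      - eapply Rle_trans; [apply Ht|]. apply Rmax_case; lra. }
    eexists. apply is_derive_diag_sum. apply (near_triangle s); auto; lra.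
  - intros t Ht. rewrite Rmin_left, Rmax_right in Ht; try lra.
    apply (diag_sum_du_continuity s); auto; [rewrite Rminus_diag, Rabs_R0|]; lra.
  - exists (mkposreal (rho/8) ltac:(lra)). intros x' t Hx' Ht. simpl in *.
    apply (diag_sum_du_continuity s); auto. apply Rabs_lt_between' in Ht. lra.
  - apply continuity_pt_filterlim. apply diag_sum_continuous. apply (near_triangle s); auto;
      [rewrite Rminus_diag, Rabs_R0|]; lra.
Qed.

Lemma is_derive_b_diag s t : 0 <= s <= T -> -rho/8 < t < s + rho/8 ->
  is_derive (fun t => b (s - t) t) t (- bu (s - t) t + bz (s - t) t).
Proof.
  intros Hs Ht.
  assert (HD : differentiable_pt_lim b (s - t) t (bu (s - t) t) (bz (s - t) t)).
  { apply filterdiff_differentiable_pt_lim.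
    apply (is_derive_filterdiff b (s - t) t bu (bz (s - t) t)).
    - apply (proj1 (locally_2d_locally
                      (fun u v => is_derive (fun z => b z v) u (bu u v)) (s - t) t)).
      exists (mkposreal (rho/32) ltac:(lra)). intros u v Hu Hv.
      simpl in *. apply Hdb.
      replace u with ((u + v) - v) by ring. apply (near_triangle s); auto.
      + apply Rabs_lt_between' in Hu, Hv. apply Rabs_lt_between'; lra.
      + apply Rabs_lt_between' in Hv. lra.
    - apply Hdbz. apply (near_triangle s); auto;
        [rewrite Rminus_diag, Rabs_R0|]; lra.
    - apply (proj1 (continuity_2d_pt_filterlim bu (s - t) t)). apply Hcbu.
      apply (near_triangle s); auto;
        [rewrite Rminus_diag, Rabs_R0|]; lra. }
  apply is_derive_Reals.
  replace (- bu (s - t) t + bz (s - t) t) with (bu (s - t) t * (-1) + bz (s - t) t * 1) by ring.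
  apply (derivable_pt_lim_comp_2d b (fun t => s - t) (fun t => t)); auto.
  - apply is_derive_Reals. auto_derive; auto; ring.
  - apply is_derive_Reals. auto_derive; auto.
Qed.

Lemma diag_integral_deriv_val s : 0 < s < T ->
  RInt (fun t => Derive (fun u => diag_sum u t) s) 0 s + diag_sum s s * 1 = a 0 s + b s 0.
Proof.
  intros Hs.
  (* inside the triangle [au = - bz], so the integrand is minus the total derivative of
     [t |-> b (s - t) t] *)
  rewrite (RInt_ext _ (fun t => - (- bu (s - t) t + bz (s - t) t))).
  2:{ intros t Ht. rewrite Rmin_left, Rmax_right in Ht; try lra.
      assert (Hn : Near (s - t) t)
        by (apply (near_triangle s); [lra|rewrite Rminus_diag, Rabs_R0|]; lra).
      apply eq_trans with (diag_sum_du s t);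
        [apply is_derive_unique, is_derive_diag_sum; exact Hn|].
      unfold diag_sum_du.
      assert (E : au (s - t) t + bz (s - t) t = 0) by (apply Hbal; unfold in_open_wedge; lra).
      lra. }
  assert (HI : is_RInt (fun t => - (- bu (s - t) t + bz (s - t) t)) 0 s
                 (minus (- b (s - s) s) (- b (s - 0) 0))).
  { apply (is_RInt_derive (fun t => - b (s - t) t)).
    - intros t Ht. rewrite Rmin_left, Rmax_right in Ht; try lra.
      apply (is_derive_opp (fun t => b (s - t) t)). apply is_derive_b_diag; lra.
    - intros t Ht. rewrite Rmin_left, Rmax_right in Ht; try lra.
      apply (continuous_opp (V := R_NormedModule) (fun t => - bu (s - t) t + bz (s - t) t)).
      apply continuous_plusR.
      + apply (continuous_opp (V := R_NormedModule) (fun t => bu (s - t) t)).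
        apply (continuous_antidiag (fun u v => bu u v)). apply Hcbu. apply (near_triangle s);
          [lra|rewrite Rminus_diag, Rabs_R0|]; lra.
      + apply (continuous_antidiag (fun u v => bz u v)). apply Hcbz. apply (near_triangle s);
          [lra|rewrite Rminus_diag, Rabs_R0|]; lra. }
  apply is_RInt_uniqueR in HI. rewrite HI.
  unfold diag_sum. replace (s - s) with 0 by ring. replace (s - 0) with s by ring.
  unfold minus, plus, opp; simpl. ring.
Qed.

Definition axes_sum t := a 0 t + b t 0.

Lemma axes_sum_continuous t : -rho/2 < t < T + rho/2 -> continuous axes_sum t.
Proof.
  intros Ht. destruct (near_axes t Ht). unfold axes_sum. apply continuous_plusR.
  - apply (continuity_2d_pt_snd a). auto.
  - apply (continuity_2d_pt_fst b). auto.
Qed.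

Lemma ex_RInt_axes_sum c d : (forall t, Rmin c d <= t <= Rmax c d -> -rho/2 < t < T + rho/2) ->
  ex_RInt axes_sum c d.
Proof. intros H. apply ex_RInt_continuousR. intros t Ht. apply axes_sum_continuous. auto. Qed.

Lemma is_derive_RInt_axes_sum s :
  0 <= s <= T -> is_derive (fun s0 => RInt axes_sum 0 s0) s (axes_sum s).
Proof.
  intros Hs.
  apply (is_derive_RInt (V := R_NormedModule) axes_sum (fun s0 => RInt axes_sum 0 s0) 0 s).
  - exists (mkposreal (rho/4) ltac:(lra)). intros y Hy. apply ball_Rabs in Hy. simpl in Hy.
    apply (RInt_correct (V := R_CompleteNormedModule)). apply ex_RInt_axes_sum. intros t Ht.
    apply Rabs_lt_between' in Hy.
    split.
    + eapply Rlt_le_trans; [|apply Ht]. apply Rmin_case; lra.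
    + eapply Rle_lt_trans; [apply Ht|]. apply Rmax_case; lra.
  - apply axes_sum_continuous. lra.
Qed.

Lemma triangle_flux_balance :
  RInt (fun z => a (T - z) z + b (T - z) z) 0 T =
  RInt (fun z => a 0 z) 0 T + RInt (fun u => b u 0) 0 T.
Proof.
  (* flux through the antidiagonal [u + z = s] minus the flux through the two axes *)
  set (Phi := fun s => RInt (fun t => diag_sum s t) 0 s - RInt axes_sum 0 s).
  assert (HPd : forall s, 0 <= s <= T ->
            is_derive Phi s ((RInt (fun t => Derive (fun u => diag_sum u t) s) 0 s
                              + diag_sum s s * 1) - axes_sum s)).
  { intros s Hs. unfold Phi.
    apply (is_derive_minus (fun s0 => RInt (fun t => diag_sum s0 t) 0 s0)
             (fun s0 => RInt axes_sum 0 s0)).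
    - apply is_derive_diag_integral; auto.
    - apply is_derive_RInt_axes_sum; auto. }
  destruct (MVT_gen Phi 0 T (fun _ => 0)) as (c & Hc & HM).
  - intros x Hx. rewrite Rmin_left, Rmax_right in Hx; try lra.
    assert (E : RInt (fun t => Derive (fun u => diag_sum u t) x) 0 x + diag_sum x x * 1
                - axes_sum x = 0).
    { rewrite diag_integral_deriv_val by lra. unfold axes_sum. ring. }
    rewrite <- E. apply HPd; lra.
  - intros x Hx. rewrite Rmin_left, Rmax_right in Hx; try lra.
    apply continuity_pt_filterlim, (@ex_derive_continuous R_AbsRing R_NormedModule Phi x).
    eexists. apply HPd; auto.
  - assert (E0 : Phi 0 = 0).
    { unfold Phi. rewrite !RInt_point. unfold zero; simpl. ring. }
    rewrite E0 in HM. unfold Phi in HM.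
    assert (ET : RInt (fun t => diag_sum T t) 0 T = RInt axes_sum 0 T) by lra.
    unfold diag_sum in ET. rewrite ET. unfold axes_sum.
    apply (RInt_plus (V := R_CompleteNormedModule) (fun z => a 0 z) (fun u => b u 0)).
    + apply ex_RInt_continuousR. intros t Ht. rewrite Rmin_left, Rmax_right in Ht; try lra.
      apply (continuity_2d_pt_snd a). apply Hca. apply (proj1 (near_axes t ltac:(lra))).
    + apply ex_RInt_continuousR. intros t Ht. rewrite Rmin_left, Rmax_right in Ht; try lra.
      apply (continuity_2d_pt_fst b). apply Hcb. apply (proj2 (near_axes t ltac:(lra))).
Qed.
End TriangleFlux.

Definition C2_pt (f : fun4) u x y z := cont4_at f u x y z /\
  forall i j, (i < 4)%nat -> (j < 4)%nat ->
    ex_pd i f u x y z /\ ex_pd j (pd i f) u x y z /\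
    cont4_at (pd i f) u x y z /\ cont4_at (pd j (pd i f)) u x y z.

Ltac continuity_2d_of_cont4 H :=
  apply continuity_2d_pt_eps; intros e He; destruct (H e He) as (d' & Hd' & H');
  exists d'; split; [exact Hd'|]; intros a b Ha Hb;
  apply H'; rewrite ?Rminus_diag, ?Rabs_R0; assumption.

(* Schwarz's theorem for the slice [g] of [f] in the coordinates [i < j]; [Hbox] is the
   C^2 box hypothesis restricted to that slice. *)
Ltac schwarz_slice Hbox Hc Hd g i j :=
  apply (Schwarz g);
  [ exists (mkposreal _ Hd); intros a b Ha Hb; simpl in Ha, Hb;
    destruct (Hbox a b) as [_ Hab];
    [ unfold box4; rewrite ?Rminus_diag, ?Rabs_R0; repeat split; assumption
    | destruct (Hab i j) as (A1 & A2 & _); [lia|lia|];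
      destruct (Hab j i) as (B1 & B2 & _); [lia|lia|];
      repeat split; [exact A1|exact B1|exact B2|exact A2] ]
  | continuity_2d_of_cont4 (proj2 (proj2 (proj2 (Hc j i ltac:(lia) ltac:(lia)))))
  | continuity_2d_of_cont4 (proj2 (proj2 (proj2 (Hc i j ltac:(lia) ltac:(lia))))) ].

Lemma pd_comm (f : fun4) i j u x y z : (i < 4)%nat -> (j < 4)%nat ->
  (exists d, 0 < d /\ forall u' x' y' z', box4 d u x y z u' x' y' z' -> C2_pt f u' x' y' z') ->
  pd i (pd j f) u x y z = pd j (pd i f) u x y z.
Proof.
  intros Hi Hj (d & Hd & H).
  destruct (H u x y z (box4_center d u x y z Hd)) as [_ Hc].
  assert (Hsym : forall i j, (i < j)%nat -> (j < 4)%nat ->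
            pd i (pd j f) u x y z = pd j (pd i f) u x y z).
  { clear i j Hi Hj. intros i j Hij Hj.
    destruct i as [|[|[|i]]]; destruct j as [|[|[|[|j]]]]; try lia.
    - schwarz_slice (fun a b => H a b y z) Hc Hd (fun a b => f a b y z) 0%nat 1%nat.
    - schwarz_slice (fun a b => H a x b z) Hc Hd (fun a b => f a x b z) 0%nat 2%nat.
    - schwarz_slice (fun a b => H a x y b) Hc Hd (fun a b => f a x y b) 0%nat 3%nat.
    - schwarz_slice (fun a b => H u a b z) Hc Hd (fun a b => f u a b z) 1%nat 2%nat.
    - schwarz_slice (fun a b => H u a y b) Hc Hd (fun a b => f u a y b) 1%nat 3%nat.
    - schwarz_slice (fun a b => H u x a b) Hc Hd (fun a b => f u x a b) 2%nat 3%nat. }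
  destruct (Nat.lt_trichotomy i j) as [Hij|[->|Hij]].
  - apply Hsym; assumption.
  - reflexivity.
  - symmetry. apply Hsym; assumption.
Qed.

Lemma pd_ext_box (F G : fun4) i u x y z d : 0 < d ->
  (forall u' x' y' z', box4 d u x y z u' x' y' z' -> F u' x' y' z' = G u' x' y' z') ->
  pd i F u x y z = pd i G u x y z.
Proof.
  intros Hd H.
  assert (Hc := box4_center d u x y z Hd). unfold box4 in Hc.
  destruct i as [|[|[|i]]]; simpl; apply Derive_ext_loc; exists (mkposreal d Hd);
    intros t Ht; apply H; unfold box4; repeat split; try apply Ht; apply Hc.
Qed.

Lemma pd_plus (f g : fun4) i u x y z : ex_pd i f u x y z -> ex_pd i g u x y z ->
  pd i (fun a b c d => f a b c d + g a b c d) u x y z = pd i f u x y z + pd i g u x y z.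
Proof. destruct i as [|[|[|i]]]; apply Derive_plus. Qed.

Lemma ex_pd_plus (f g : fun4) i u x y z : ex_pd i f u x y z -> ex_pd i g u x y z ->
  ex_pd i (fun a b c d => f a b c d + g a b c d) u x y z.
Proof. destruct i as [|[|[|i]]]; apply (ex_derive_plus (K := R_AbsRing) (V := R_NormedModule)). Qed.

Lemma pd_scal (c : R) (f : fun4) i u x y z :
  pd i (fun a b c' d => c * f a b c' d) u x y z = c * pd i f u x y z.
Proof. destruct i as [|[|[|i]]]; apply Derive_scal. Qed.

Lemma Derive_shift (g : R -> R) c x : Derive (fun t => g (t + c)) x = Derive g (x + c).
Proof.
  unfold Derive. f_equal. apply Lim_ext. intros h.
  replace (x + h + c) with (x + c + h) by ring. reflexivity.
Qed.

Lemma pd_shift_x (f : fun4) c i u x y z :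
  pd i (fun a b c' d => f a (b + c) c' d) u x y z = pd i f u (x + c) y z.
Proof.
  destruct i as [|[|[|i]]]; [reflexivity|apply (Derive_shift (fun t => f u t y z))|..];
    reflexivity.
Qed.

Lemma pd_shift_y (f : fun4) c i u x y z :
  pd i (fun a b c' d => f a b (c' + c) d) u x y z = pd i f u x (y + c) z.
Proof.
  destruct i as [|[|[|i]]]; [reflexivity|reflexivity|apply (Derive_shift (fun t => f u x t z))|];
    reflexivity.
Qed.

Lemma open_wedge_box T u x y z : in_open_wedge T u z ->
  exists d, 0 < d /\ forall u' x' y' z', box4 d u x y z u' x' y' z' -> in_wedge T u' z'.
Proof.
  intros (Hu & Hz & Huz). exists (Rmin u (Rmin z ((T - u - z) / 2))).
  split; [repeat apply Rmin_pos; lra|].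
  intros u' x' y' z' (H1 & _ & _ & H4).
  pose proof (Rmin_l u (Rmin z ((T - u - z) / 2))).
  pose proof (Rmin_r u (Rmin z ((T - u - z) / 2))).
  pose proof (Rmin_l z ((T - u - z) / 2)). pose proof (Rmin_r z ((T - u - z) / 2)).
  apply Rabs_lt_between' in H1, H4. unfold in_wedge; lra.
Qed.

Lemma pd_ext_open_wedge T (F G : fun4) i u x y z :
  (forall u x y z, in_wedge T u z -> F u x y z = G u x y z) -> in_open_wedge T u z ->
  pd i F u x y z = pd i G u x y z.
Proof.
  intros H Hw. destruct (open_wedge_box T u x y z Hw) as (d & Hd & Hb).
  apply (pd_ext_box F G i u x y z d Hd). intros u' x' y' z' Hb'. apply H, (Hb u' x' y' z' Hb').
Qed.

Lemma pd_periodic_x T Lx Ly (f : fun4) i u x y z : periodic_xy T Lx Ly f -> in_open_wedge T u z ->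
  pd i f u (x + Lx) y z = pd i f u x y z.
Proof.
  intros Hper Hw. rewrite <- pd_shift_x.
  apply (pd_ext_open_wedge T); [|exact Hw]. intros; apply Hper; assumption.
Qed.

Lemma pd_periodic_y T Lx Ly (f : fun4) i u x y z : periodic_xy T Lx Ly f -> in_open_wedge T u z ->
  pd i f u x (y + Ly) z = pd i f u x y z.
Proof.
  intros Hper Hw. rewrite <- pd_shift_y.
  apply (pd_ext_open_wedge T); [|exact Hw]. intros; apply Hper; assumption.
Qed.

(** * The energy estimate *)

Section Energy.
Variables (T Lx Ly : R) (Rf P Q : fun4).
Hypothesis hT : 0 < T.
Hypothesis hLx : 0 < Lx.
Hypothesis hLy : 0 < Ly.
Hypothesis hperR : periodic_xy T Lx Ly Rf.
Hypothesis hperP : periodic_xy T Lx Ly P.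
Hypothesis hperQ : periodic_xy T Lx Ly Q.
Hypothesis heq1 : forall u x y z, in_wedge T u z ->
  2 * pdu Rf u x y z = pdx P u x y z + pdy Q u x y z + pdz Rf u x y z.
Hypothesis heq2 : forall u x y z, in_wedge T u z -> pdz P u x y z = pdx Rf u x y z.
Hypothesis heq3 : forall u x y z, in_wedge T u z -> pdz Q u x y z = pdy Rf u x y z.

Definition regular u x y z := C2_pt Rf u x y z /\ C2_pt P u x y z /\ C2_pt Q u x y z.

Variable eta : R.
Hypothesis heta : 0 < eta.
Hypothesis Heta : forall u x y z, in_wedge T u z -> 0 <= x <= Lx -> 0 <= y <= Ly ->
  forall u' x' y' z', box4 eta u x y z u' x' y' z' -> regular u' x' y' z'.

Definition unknown (f : fun4) := f = Rf \/ f = P \/ f = Q.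

Lemma unknown_Rf : unknown Rf. Proof. left; reflexivity. Qed.
Lemma unknown_P : unknown P. Proof. right; left; reflexivity. Qed.
Lemma unknown_Q : unknown Q. Proof. right; right; reflexivity. Qed.

Lemma C2_pt_unknown f u x y z : unknown f -> regular u x y z -> C2_pt f u x y z.
Proof. intros [ -> | [ -> | -> ] ] (A & B & C); assumption. Qed.

Lemma cont4_pd_unknown f i u x y z : unknown f -> (i < 4)%nat -> regular u x y z ->
  cont4_at (pd i f) u x y z.
Proof. intros Hf Hi Hr. apply (proj2 (C2_pt_unknown f u x y z Hf Hr) i i Hi Hi). Qed.

Lemma cont4_pd2_unknown f i j u x y z : unknown f -> (i < 4)%nat -> (j < 4)%nat ->
  regular u x y z -> cont4_at (pd j (pd i f)) u x y z.
Proof. intros Hf Hi Hj Hr. apply (proj2 (C2_pt_unknown f u x y z Hf Hr) i j Hi Hj). Qed.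

Lemma ex_pd2_unknown f i j u x y z : unknown f -> (i < 4)%nat -> (j < 4)%nat ->
  regular u x y z -> ex_pd j (pd i f) u x y z.
Proof. intros Hf Hi Hj Hr. apply (proj2 (C2_pt_unknown f u x y z Hf Hr) i j Hi Hj). Qed.

Lemma pd_comm_unknown f i j u x y z : unknown f -> (i < 4)%nat -> (j < 4)%nat ->
  in_wedge T u z -> 0 <= x <= Lx -> 0 <= y <= Ly ->
  pd i (pd j f) u x y z = pd j (pd i f) u x y z.
Proof.
  intros Hf Hi Hj Hw Hx Hy. apply pd_comm; [assumption|assumption|].
  exists eta. split; [exact heta|]. intros u' x' y' z' Hb.
  apply C2_pt_unknown; [exact Hf|]. apply (Heta u x y z); assumption.
Qed.

Ltac unknown_tac f := lazymatch f with
  | Rf => exact unknown_Rf | P => exact unknown_P | Q => exact unknown_Q end.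

Ltac cont4_auto Hr := repeat match goal with
  | |- cont4_at (fun a b c d => _ - _) _ _ _ _ => apply cont4_minus
  | |- cont4_at (fun a b c d => _ + _) _ _ _ _ => apply cont4_plus
  | |- cont4_at (fun a b c d => _ * _) _ _ _ _ => apply cont4_mult
  | |- cont4_at (fun a b c d => _ ^ 2) _ _ _ _ => apply cont4_pow2
  | |- cont4_at (fun a b c d => pd ?j (pd ?i ?f) a b c d) _ _ _ _ =>
      apply (cont4_pd2_unknown f i j); [unknown_tac f|lia|lia|exact Hr]
  | |- cont4_at (fun a b c d => pd ?i ?f a b c d) _ _ _ _ =>
      apply (cont4_pd_unknown f i); [unknown_tac f|lia|exact Hr]
  | |- cont4_at (pd ?j (pd ?i ?f)) _ _ _ _ =>
      apply (cont4_pd2_unknown f i j); [unknown_tac f|lia|lia|exact Hr]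
  | |- cont4_at (pd ?i ?f) _ _ _ _ => apply (cont4_pd_unknown f i); [unknown_tac f|lia|exact Hr]
  | |- cont4_at (fun a b c d => _) _ _ _ _ => apply cont4_const
  end.

Lemma is_derive_pd_u f i u x y z : unknown f -> (i < 4)%nat -> regular u x y z ->
  is_derive (fun t => pd i f t x y z) u (pd 0 (pd i f) u x y z).
Proof. intros Hf Hi Hr. apply Derive_correct, (ex_pd2_unknown f i 0); auto; lia. Qed.

Lemma is_derive_pd_x f i u x y z : unknown f -> (i < 4)%nat -> regular u x y z ->
  is_derive (fun t => pd i f u t y z) x (pd 1 (pd i f) u x y z).
Proof. intros Hf Hi Hr. apply Derive_correct, (ex_pd2_unknown f i 1); auto; lia. Qed.

Lemma is_derive_pd_y f i u x y z : unknown f -> (i < 4)%nat -> regular u x y z ->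
  is_derive (fun t => pd i f u x t z) y (pd 2 (pd i f) u x y z).
Proof. intros Hf Hi Hr. apply Derive_correct, (ex_pd2_unknown f i 2); auto; lia. Qed.

Lemma is_derive_pd_z f i u x y z : unknown f -> (i < 4)%nat -> regular u x y z ->
  is_derive (fun t => pd i f u x y t) z (pd 3 (pd i f) u x y z).
Proof. intros Hf Hi Hr. apply Derive_correct, (ex_pd2_unknown f i 3); auto; lia. Qed.

Ltac derive_auto Hr := repeat match goal with
  | |- is_derive (fun t => @?f t - @?g t) _ _ => apply (is_derive_minusR f g)
  | |- is_derive (fun t => @?f t + @?g t) _ _ => apply (is_derive_plusR f g)
  | |- is_derive (fun t => @?f t ^ 2) _ _ => apply (is_derive_pow2 f)
  | |- is_derive (fun t => 2 * @?f t) _ _ => apply (is_derive_scal f)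
  | |- is_derive (fun t => @?f t * @?g t) _ _ => apply (is_derive_multR f g)
  | |- is_derive (fun t => pd ?i ?f t ?x ?y ?z) ?u _ =>
      apply (is_derive_pd_u f i u x y z); [unknown_tac f|lia|exact Hr]
  | |- is_derive (fun t => pd ?i ?f ?u t ?y ?z) ?x _ =>
      apply (is_derive_pd_x f i u x y z); [unknown_tac f|lia|exact Hr]
  | |- is_derive (fun t => pd ?i ?f ?u ?x t ?z) ?y _ =>
      apply (is_derive_pd_y f i u x y z); [unknown_tac f|lia|exact Hr]
  | |- is_derive (fun t => pd ?i ?f ?u ?x ?y t) ?z _ =>
      apply (is_derive_pd_z f i u x y z); [unknown_tac f|lia|exact Hr]
  end.

Ltac generalize_pd := repeat match goal with |- context [pd ?i ?f ?u ?x ?y ?z] =>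
  let v := fresh "v" in generalize (pd i f u x y z) as v; intros v end.

Definition energy_T : fun4 := fun u x y z =>
    pdx Rf u x y z ^ 2 + pdy Rf u x y z ^ 2 + pdz Rf u x y z ^ 2
  + pdx P u x y z ^ 2 + pdx Q u x y z ^ 2 + pdy P u x y z ^ 2 + pdy Q u x y z ^ 2.
Definition energy_u : fun4 := fun u x y z =>
  pdx Rf u x y z ^ 2 + pdy Rf u x y z ^ 2 + pdz Rf u x y z ^ 2.
Definition energy_z : fun4 := fun u x y z =>
  pdx P u x y z ^ 2 + pdx Q u x y z ^ 2 + pdy P u x y z ^ 2 + pdy Q u x y z ^ 2.

Definition flux_u : fun4 := fun u x y z =>
  2 * (pd 1 Rf u x y z ^ 2 + pd 2 Rf u x y z ^ 2 + pd 3 Rf u x y z ^ 2).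
Definition flux_z : fun4 := fun u x y z =>
  pd 1 P u x y z ^ 2 + pd 1 Q u x y z ^ 2 + pd 2 P u x y z ^ 2 + pd 2 Q u x y z ^ 2
  - pd 3 Rf u x y z ^ 2.
Definition flux_x : fun4 := fun u x y z =>
  pd 1 Rf u x y z * pd 1 P u x y z + pd 2 Rf u x y z * pd 2 P u x y z
  + pd 3 Rf u x y z * pd 1 Rf u x y z.
Definition flux_y : fun4 := fun u x y z =>
  pd 1 Rf u x y z * pd 1 Q u x y z + pd 2 Rf u x y z * pd 2 Q u x y z
  + pd 3 Rf u x y z * pd 2 Rf u x y z.

Definition flux_u_du : fun4 := fun u x y z =>
  4 * (pd 1 Rf u x y z * pd 0 (pd 1 Rf) u x y z + pd 2 Rf u x y z * pd 0 (pd 2 Rf) u x y z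
       + pd 3 Rf u x y z * pd 0 (pd 3 Rf) u x y z).
Definition flux_z_d (i : nat) : fun4 := fun u x y z =>
  2 * (pd 1 P u x y z * pd i (pd 1 P) u x y z + pd 1 Q u x y z * pd i (pd 1 Q) u x y z
     + pd 2 P u x y z * pd i (pd 2 P) u x y z + pd 2 Q u x y z * pd i (pd 2 Q) u x y z
     - pd 3 Rf u x y z * pd i (pd 3 Rf) u x y z).
Definition flux_x_dx : fun4 := fun u x y z =>
  pd 1 (pd 1 Rf) u x y z * pd 1 P u x y z + pd 1 Rf u x y z * pd 1 (pd 1 P) u x y z
  + (pd 1 (pd 2 Rf) u x y z * pd 2 P u x y z + pd 2 Rf u x y z * pd 1 (pd 2 P) u x y z)
  + (pd 1 (pd 3 Rf) u x y z * pd 1 Rf u x y z + pd 3 Rf u x y z * pd 1 (pd 1 Rf) u x y z).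
Definition flux_y_dy : fun4 := fun u x y z =>
  pd 2 (pd 1 Rf) u x y z * pd 1 Q u x y z + pd 1 Rf u x y z * pd 2 (pd 1 Q) u x y z
  + (pd 2 (pd 2 Rf) u x y z * pd 2 Q u x y z + pd 2 Rf u x y z * pd 2 (pd 2 Q) u x y z)
  + (pd 2 (pd 3 Rf) u x y z * pd 2 Rf u x y z + pd 3 Rf u x y z * pd 2 (pd 2 Rf) u x y z).

Definition regular_cont (k : fun4) := forall u x y z, regular u x y z -> cont4_at k u x y z.

Ltac regular_cont_tac := let Hr := fresh "Hr" in
  intros ? ? ? ? Hr; unfold energy_T, energy_u, energy_z, flux_u, flux_z, flux_x, flux_y,
    flux_u_du, flux_z_d, flux_x_dx, flux_y_dy, pdx, pdy, pdz; cbv beta; cont4_auto Hr.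

Lemma regular_cont_scal c k : regular_cont k -> regular_cont (fun a b c' d => c * k a b c' d).
Proof. intros Hk u x y z Hr. apply cont4_mult; [apply cont4_const|apply Hk, Hr]. Qed.

Lemma regular_cont_energy_T : regular_cont energy_T. Proof. regular_cont_tac. Qed.
Lemma regular_cont_energy_u : regular_cont energy_u. Proof. regular_cont_tac. Qed.
Lemma regular_cont_energy_z : regular_cont energy_z. Proof. regular_cont_tac. Qed.
Lemma regular_cont_flux_u : regular_cont flux_u. Proof. regular_cont_tac. Qed.
Lemma regular_cont_flux_z : regular_cont flux_z. Proof. regular_cont_tac. Qed.
Lemma regular_cont_flux_x : regular_cont flux_x. Proof. regular_cont_tac. Qed.
Lemma regular_cont_flux_u_du : regular_cont flux_u_du. Proof. regular_cont_tac. Qed.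
Lemma regular_cont_flux_z_d i : (i < 4)%nat -> regular_cont (flux_z_d i).
Proof. intros Hi. regular_cont_tac. Qed.
Lemma regular_cont_flux_x_dx : regular_cont flux_x_dx. Proof. regular_cont_tac. Qed.
Lemma regular_cont_flux_y_dy : regular_cont flux_y_dy. Proof. regular_cont_tac. Qed.

Ltac derive_flux_tac Hr := eapply is_derive_eq; [derive_auto Hr|]; generalize_pd; ring.

Lemma is_derive_flux_u u x y z : regular u x y z ->
  is_derive (fun t => flux_u t x y z) u (flux_u_du u x y z).
Proof. intros Hr. unfold flux_u, flux_u_du. derive_flux_tac Hr. Qed.

Lemma is_derive_flux_z_u u x y z : regular u x y z ->
  is_derive (fun t => flux_z t x y z) u (flux_z_d 0 u x y z).
Proof. intros Hr. unfold flux_z, flux_z_d. derive_flux_tac Hr. Qed.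

Lemma is_derive_flux_z_z u x y z : regular u x y z ->
  is_derive (fun t => flux_z u x y t) z (flux_z_d 3 u x y z).
Proof. intros Hr. unfold flux_z, flux_z_d. derive_flux_tac Hr. Qed.

Lemma is_derive_flux_x u x y z : regular u x y z ->
  is_derive (fun t => flux_x u t y z) x (flux_x_dx u x y z).
Proof. intros Hr. unfold flux_x, flux_x_dx. derive_flux_tac Hr. Qed.

Lemma is_derive_flux_y u x y z : regular u x y z ->
  is_derive (fun t => flux_y u x t z) y (flux_y_dy u x y z).
Proof. intros Hr. unfold flux_y, flux_y_dy. derive_flux_tac Hr. Qed.

Lemma pd_eq1 i u x y z : (i < 4)%nat -> in_open_wedge T u z -> regular u x y z ->
  2 * pd i (pd 0 Rf) u x y z
  = pd i (pd 1 P) u x y z + pd i (pd 2 Q) u x y z + pd i (pd 3 Rf) u x y z.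
Proof.
  intros Hi Hw Hr.
  assert (HP := ex_pd2_unknown P 1 i u x y z unknown_P ltac:(lia) Hi Hr).
  assert (HQ := ex_pd2_unknown Q 2 i u x y z unknown_Q ltac:(lia) Hi Hr).
  assert (HR := ex_pd2_unknown Rf 3 i u x y z unknown_Rf ltac:(lia) Hi Hr).
  rewrite <- pd_scal.
  rewrite <- (pd_plus (pd 1 P) (pd 2 Q)) by assumption.
  rewrite <- (pd_plus (fun a b c d => pd 1 P a b c d + pd 2 Q a b c d) (pd 3 Rf))
    by first [exact HR | exact (ex_pd_plus _ _ i u x y z HP HQ)].
  apply (pd_ext_open_wedge T); [|exact Hw]. exact heq1.
Qed.

Lemma pd_eq2 i u x y z : in_open_wedge T u z -> pd i (pd 3 P) u x y z = pd i (pd 1 Rf) u x y z.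
Proof. apply (pd_ext_open_wedge T). exact heq2. Qed.

Lemma pd_eq3 i u x y z : in_open_wedge T u z -> pd i (pd 3 Q) u x y z = pd i (pd 2 Rf) u x y z.
Proof. apply (pd_ext_open_wedge T). exact heq3. Qed.

Lemma flux_balance_pointwise u x y z : in_open_wedge T u z -> 0 <= x <= Lx -> 0 <= y <= Ly ->
  flux_u_du u x y z + flux_z_d 3 u x y z = 2 * flux_x_dx u x y z + 2 * flux_y_dy u x y z.
Proof.
  intros Hw Hx Hy.
  assert (Hw' : in_wedge T u z) by (destruct Hw as (? & ? & ?); unfold in_wedge; lra).
  assert (Hr : regular u x y z) by (apply (Heta u x y z); auto; apply box4_center; auto).
  assert (comm : forall f i j, unknown f -> (i < 4)%nat -> (j < 4)%nat ->
            pd i (pd j f) u x y z = pd j (pd i f) u x y z)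
    by (intros; apply pd_comm_unknown; assumption).
  assert (E1 : forall i, (i < 4)%nat -> pd i (pd 0 Rf) u x y z
              = (pd i (pd 1 P) u x y z + pd i (pd 2 Q) u x y z + pd i (pd 3 Rf) u x y z) / 2)
    by (intros i Hi; rewrite <- (pd_eq1 i u x y z Hi Hw Hr); field).
  unfold flux_u_du, flux_z_d, flux_x_dx, flux_y_dy.
  rewrite (comm Rf 0%nat 1%nat unknown_Rf), (comm Rf 0%nat 2%nat unknown_Rf),
    (comm Rf 0%nat 3%nat unknown_Rf) by lia.
  rewrite (E1 1%nat), (E1 2%nat), (E1 3%nat) by lia.
  rewrite (comm P 1%nat 2%nat unknown_P), <- (comm Q 1%nat 2%nat unknown_Q),
    <- (comm P 1%nat 3%nat unknown_P), <- (comm Q 2%nat 3%nat unknown_Q),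
    <- (comm Q 1%nat 3%nat unknown_Q), <- (comm P 2%nat 3%nat unknown_P) by lia.
  rewrite (pd_eq2 1), (pd_eq2 2), (pd_eq3 1), (pd_eq3 2) by exact Hw.
  rewrite (comm Rf 1%nat 2%nat unknown_Rf) by lia.
  field.
Qed.

Definition near_wedge u z := exists u' z', in_wedge T u' z' /\
  Rabs (u - u') < eta / 2 /\ Rabs (z - z') < eta / 2.

Lemma near_wedge_intro u' z' : in_wedge T u' z' -> forall u z,
  Rabs (u - u') < eta / 2 -> Rabs (z - z') < eta / 2 -> near_wedge u z.
Proof. intros Hw u z Hu Hz. exists u', z'. auto. Qed.

Lemma near_wedge_of_wedge u z : in_wedge T u z -> near_wedge u z.
Proof. intros Hw. apply (near_wedge_intro u z Hw); rewrite Rminus_diag, Rabs_R0; lra. Qed.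

Lemma near_wedge_cell_nbhd u z : near_wedge u z -> cell_nbhd regular Lx Ly u z (eta / 2).
Proof.
  intros (u' & z' & Hw & Hu & Hz) u1 x y z1 H1 H2 Hx Hy.
  destruct (clamp_interval 0 Lx (eta / 2) x) as (cx & Hcx & Hcx'); try lra.
  destruct (clamp_interval 0 Ly (eta / 2) y) as (cy & Hcy & Hcy'); try lra.
  apply (Heta u' cx cy z' Hw Hcx Hcy).
  apply Rabs_lt_between' in Hu, Hz, H1, H2, Hcx', Hcy'.
  unfold box4; repeat split; apply Rabs_lt_between'; lra.
Qed.

Lemma wedge_cell_nbhd u z : in_wedge T u z -> cell_nbhd regular Lx Ly u z (eta / 2).
Proof. intros Hw. apply near_wedge_cell_nbhd, near_wedge_of_wedge, Hw. Qed.

Lemma int_cell_continuity_near (k : fun4) u z : regular_cont k -> near_wedge u z ->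
  continuity_2d_pt (int_cell Lx Ly k) u z.
Proof.
  intros Hk Hn. apply (int_cell_continuity_2d regular Lx Ly hLx hLy k Hk u z (eta / 2)).
  - lra.
  - apply near_wedge_cell_nbhd, Hn.
Qed.

Lemma cell_flux_balance u z : in_open_wedge T u z ->
  int_cell Lx Ly flux_u_du u z + int_cell Lx Ly (flux_z_d 3) u z = 0.
Proof.
  intros Hw.
  assert (Hs : cell_nbhd regular Lx Ly u z (eta / 2))
    by (apply wedge_cell_nbhd; destruct Hw as (? & ? & ?); unfold in_wedge; lra).
  assert (Hr : 0 < eta / 2) by lra.
  assert (perx : forall f i y, periodic_xy T Lx Ly f -> pd i f u Lx y z = pd i f u 0 y z).
  { intros f i y Hf. rewrite <- (Rplus_0_l Lx) at 1. apply (pd_periodic_x T Lx Ly); assumption. }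
  assert (pery : forall f i x, periodic_xy T Lx Ly f -> pd i f u x Ly z = pd i f u x 0 z).
  { intros f i x Hf. rewrite <- (Rplus_0_l Ly) at 1. apply (pd_periodic_y T Lx Ly); assumption. }
  rewrite <- (int_cell_plus regular Lx Ly hLx hLy flux_u_du (flux_z_d 3) u z (eta / 2)
                regular_cont_flux_u_du (regular_cont_flux_z_d 3 ltac:(lia)) Hr Hs).
  rewrite (int_cell_ext Lx Ly hLx hLy _
             (fun a b c d => 2 * flux_x_dx a b c d + 2 * flux_y_dy a b c d))
    by (intros x y Hx Hy; apply flux_balance_pointwise; [exact Hw|lra|lra]).
  rewrite (int_cell_plus regular Lx Ly hLx hLy _ _ u z (eta / 2)
             (regular_cont_scal 2 _ regular_cont_flux_x_dx)
             (regular_cont_scal 2 _ regular_cont_flux_y_dy) Hr Hs).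
  rewrite (int_cell_scal regular Lx Ly hLx hLy 2 flux_x_dx u z (eta / 2)
             regular_cont_flux_x_dx Hr Hs),
    (int_cell_scal regular Lx Ly hLx hLy 2 flux_y_dy u z (eta / 2)
       regular_cont_flux_y_dy Hr Hs).
  rewrite (int_cell_dx_periodic_eq0 regular Lx Ly hLx hLy flux_x flux_x_dx regular_cont_flux_x
             regular_cont_flux_x_dx u z (eta / 2) Hr Hs is_derive_flux_x)
    by (intros; unfold flux_x; rewrite !perx by assumption; reflexivity).
  rewrite (int_cell_dy_periodic_eq0 regular Lx Ly hLx hLy flux_y flux_y_dy
             regular_cont_flux_y_dy u z (eta / 2) Hr Hs is_derive_flux_y)
    by (intros; unfold flux_y; rewrite !pery by assumption; reflexivity).
  ring.
Qed.

Definition wedge_curve (cu cz : R -> R) := forall s, 0 <= s <= T ->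
  in_wedge T (cu s) (cz s) /\ continuous cu s /\ continuous cz s.

Lemma wedge_curve_Sigma_T : wedge_curve (fun z => T - z) (fun z => z).
Proof.
  intros s Hs. split; [unfold in_wedge; lra|].
  split; apply (ex_derive_continuous (K := R_AbsRing) (V := R_NormedModule)); auto_derive; auto.
Qed.

Lemma wedge_curve_Sigma_u : wedge_curve (fun _ => 0) (fun z => z).
Proof.
  intros s Hs. split; [unfold in_wedge; lra|].
  split; apply (ex_derive_continuous (K := R_AbsRing) (V := R_NormedModule)); auto_derive; auto.
Qed.

Lemma wedge_curve_Sigma_z : wedge_curve (fun u => u) (fun _ => 0).
Proof.
  intros s Hs. split; [unfold in_wedge; lra|].
  split; apply (ex_derive_continuous (K := R_AbsRing) (V := R_NormedModule)); auto_derive; auto.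
Qed.

Lemma ex_RInt_curve k cu cz : regular_cont k -> wedge_curve cu cz ->
  ex_RInt (fun s => int_cell Lx Ly k (cu s) (cz s)) 0 T.
Proof.
  intros Hk Hc. apply ex_RInt_continuousR. intros s Hs.
  rewrite Rmin_left, Rmax_right in Hs by lra. destruct (Hc s Hs) as (Hw & Hu & Hz).
  apply (continuous_comp_2 cu cz (int_cell Lx Ly k)); [exact Hu|exact Hz|].
  apply continuity_2d_pt_filterlim, int_cell_continuity_near; [exact Hk|].
  apply near_wedge_of_wedge, Hw.
Qed.

Lemma RInt_curve_le k1 k2 cu cz : regular_cont k1 -> regular_cont k2 -> wedge_curve cu cz ->
  (forall u x y z, in_wedge T u z -> 0 <= x <= Lx -> 0 <= y <= Ly -> k1 u x y z <= k2 u x y z) ->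
  RInt (fun s => int_cell Lx Ly k1 (cu s) (cz s)) 0 T
  <= RInt (fun s => int_cell Lx Ly k2 (cu s) (cz s)) 0 T.
Proof.
  intros Hk1 Hk2 Hc Hle. apply RInt_le; [lra|apply ex_RInt_curve; assumption..|].
  intros s Hs. assert (Hw : in_wedge T (cu s) (cz s)) by (apply Hc; lra).
  apply (int_cell_le regular Lx Ly hLx hLy k1 k2 _ _ (eta / 2) Hk1 Hk2); [lra| |].
  - apply wedge_cell_nbhd, Hw.
  - intros x y Hx Hy. apply Hle; assumption.
Qed.

Lemma RInt_curve_scal c k cu cz : regular_cont k -> wedge_curve cu cz ->
  RInt (fun s => int_cell Lx Ly (fun a b c' d => c * k a b c' d) (cu s) (cz s)) 0 T
  = c * RInt (fun s => int_cell Lx Ly k (cu s) (cz s)) 0 T.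
Proof.
  intros Hk Hc.
  rewrite <- (RInt_scal (V := R_CompleteNormedModule)) by (apply ex_RInt_curve; assumption).
  apply RInt_ext. intros s Hs. rewrite Rmin_left, Rmax_right in Hs by lra.
  apply (int_cell_scal regular Lx Ly hLx hLy c k _ _ (eta / 2) Hk); [lra|].
  apply wedge_cell_nbhd, Hc. lra.
Qed.

Lemma energy_identity :
  RInt (fun z => int_cell Lx Ly flux_u (T - z) z + int_cell Lx Ly flux_z (T - z) z) 0 T
  = RInt (fun z => int_cell Lx Ly flux_u 0 z) 0 T + RInt (fun u => int_cell Lx Ly flux_z u 0) 0 T.
Proof.
  assert (Hr : 0 < eta / 2) by lra.
  apply (triangle_flux_balance T (eta / 2) near_wedge (int_cell Lx Ly flux_u)
           (int_cell Lx Ly flux_z) (int_cell Lx Ly flux_u_du) (int_cell Lx Ly (flux_z_d 0))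
           (int_cell Lx Ly (flux_z_d 3)) hT Hr near_wedge_intro).
  - intros u z. apply int_cell_continuity_near, regular_cont_flux_u.
  - intros u z. apply int_cell_continuity_near, regular_cont_flux_z.
  - intros u z. apply int_cell_continuity_near, regular_cont_flux_u_du.
  - intros u z. apply int_cell_continuity_near, regular_cont_flux_z_d; lia.
  - intros u z. apply int_cell_continuity_near, regular_cont_flux_z_d; lia.
  - intros u z Hn. apply (is_derive_int_cell_u regular Lx Ly hLx hLy _ _ regular_cont_flux_u
      regular_cont_flux_u_du is_derive_flux_u u z (eta / 2) Hr), near_wedge_cell_nbhd, Hn.
  - intros u z Hn. apply (is_derive_int_cell_u regular Lx Ly hLx hLy _ _ regular_cont_flux_z
      (regular_cont_flux_z_d 0 ltac:(lia)) is_derive_flux_z_u u z (eta / 2) Hr),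
      near_wedge_cell_nbhd, Hn.
  - intros u z Hn. apply (is_derive_int_cell_z regular Lx Ly hLx hLy _ _ regular_cont_flux_z
      (regular_cont_flux_z_d 3 ltac:(lia)) is_derive_flux_z_z u z (eta / 2) Hr),
      near_wedge_cell_nbhd, Hn.
  - exact cell_flux_balance.
Qed.

Lemma energy_T_le_flux u x y z : energy_T u x y z <= flux_u u x y z + flux_z u x y z.
Proof.
  unfold energy_T, flux_u, flux_z, pdx, pdy, pdz.
  pose proof (pow2_ge_0 (pd 1 Rf u x y z)). pose proof (pow2_ge_0 (pd 2 Rf u x y z)). lra.
Qed.

Lemma flux_z_le_energy_z u x y z : flux_z u x y z <= 2 * energy_z u x y z.
Proof.
  unfold flux_z, energy_z, pdx, pdy, pdz.
  pose proof (pow2_ge_0 (pd 1 P u x y z)). pose proof (pow2_ge_0 (pd 1 Q u x y z)).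
  pose proof (pow2_ge_0 (pd 2 P u x y z)). pose proof (pow2_ge_0 (pd 2 Q u x y z)).
  pose proof (pow2_ge_0 (pd 3 Rf u x y z)). lra.
Qed.

Lemma energy_inequality :
  int_Sigma_T T Lx Ly energy_T <= 2 * (int_Sigma_u T Lx Ly energy_u + int_Sigma_z T Lx Ly energy_z).
Proof.
  change (RInt (fun z => int_cell Lx Ly energy_T (T - z) z) 0 T
          <= 2 * (RInt (fun z => int_cell Lx Ly energy_u 0 z) 0 T
                   + RInt (fun u => int_cell Lx Ly energy_z u 0) 0 T)).
  assert (Hsum : regular_cont (fun a b c d => flux_u a b c d + flux_z a b c d))
    by (intros u x y z Hr; apply cont4_plus; [apply regular_cont_flux_u|apply regular_cont_flux_z];
        exact Hr).
  assert (HT : RInt (fun z => int_cell Lx Ly energy_T (T - z) z) 0 T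
               <= RInt (fun z => int_cell Lx Ly flux_u (T - z) z
                                 + int_cell Lx Ly flux_z (T - z) z) 0 T).
  { eapply Rle_trans.
    - apply (RInt_curve_le energy_T _ _ _ regular_cont_energy_T Hsum wedge_curve_Sigma_T).
      intros u x y z _ _ _. apply energy_T_le_flux.
    - right. apply RInt_ext. intros z Hz. rewrite Rmin_left, Rmax_right in Hz by lra.
      apply (int_cell_plus regular Lx Ly hLx hLy flux_u flux_z _ _ (eta / 2) regular_cont_flux_u
               regular_cont_flux_z); [lra|apply wedge_cell_nbhd; unfold in_wedge; lra]. }
  rewrite energy_identity in HT.
  assert (Hu : RInt (fun z => int_cell Lx Ly flux_u 0 z) 0 T
               = 2 * RInt (fun z => int_cell Lx Ly energy_u 0 z) 0 T)
    by exact (RInt_curve_scal 2 energy_u _ _ regular_cont_energy_u wedge_curve_Sigma_u).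
  assert (Hz : RInt (fun u => int_cell Lx Ly flux_z u 0) 0 T
               <= 2 * RInt (fun u => int_cell Lx Ly energy_z u 0) 0 T).
  { eapply Rle_trans.
    - apply (RInt_curve_le flux_z _ _ _ regular_cont_flux_z
               (regular_cont_scal 2 _ regular_cont_energy_z) wedge_curve_Sigma_z).
      intros u x y z _ _ _. apply flux_z_le_energy_z.
    - right. exact (RInt_curve_scal 2 energy_z _ _ regular_cont_energy_z wedge_curve_Sigma_z). }
  lra.
Qed.
End Energy.

Lemma regular_box_of_C2_at (Rf P Q : fun4) u x y z :
  C2_at Rf u x y z -> C2_at P u x y z -> C2_at Q u x y z ->
  exists d, 0 < d /\ forall u' x' y' z', box4 d u x y z u' x' y' z' -> regular Rf P Q u' x' y' z'.
Proof.
  intros (d1 & Hd1 & H1) (d2 & Hd2 & H2) (d3 & Hd3 & H3).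
  exists (Rmin d1 (Rmin d2 d3)). split; [repeat apply Rmin_pos; assumption|].
  intros u' x' y' z' (A & B & C & D).
  pose proof (Rmin_l d1 (Rmin d2 d3)). pose proof (Rmin_r d1 (Rmin d2 d3)).
  pose proof (Rmin_l d2 d3). pose proof (Rmin_r d2 d3).
  split; [|split]; [apply H1|apply H2|apply H3]; lra.
Qed.

Theorem mainTheorem2 (T Lx Ly : R) (Rf P Q : R -> R -> R -> R -> R)
  (hT : 0 < T) (hLx : 0 < Lx) (hLy : 0 < Ly)
  (hC2 : forall u x y z, in_wedge T u z ->
     C2_at Rf u x y z /\ C2_at P u x y z /\ C2_at Q u x y z)
  (hperR : periodic_xy T Lx Ly Rf)
  (hperP : periodic_xy T Lx Ly P)
  (hperQ : periodic_xy T Lx Ly Q)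
  (heq1 : forall u x y z, in_wedge T u z ->
     2 * pdu Rf u x y z = pdx P u x y z + pdy Q u x y z + pdz Rf u x y z)
  (heq2 : forall u x y z, in_wedge T u z -> pdz P u x y z = pdx Rf u x y z)
  (heq3 : forall u x y z, in_wedge T u z -> pdz Q u x y z = pdy Rf u x y z) :
  int_Sigma_T T Lx Ly (fun u x y z =>
      pdx Rf u x y z ^ 2 + pdy Rf u x y z ^ 2 + pdz Rf u x y z ^ 2
    + pdx P u x y z ^ 2 + pdx Q u x y z ^ 2 + pdy P u x y z ^ 2 + pdy Q u x y z ^ 2)
  <= 2 * (int_Sigma_u T Lx Ly (fun u x y z =>
            pdx Rf u x y z ^ 2 + pdy Rf u x y z ^ 2 + pdz Rf u x y z ^ 2)
        + int_Sigma_z T Lx Ly (fun u x y z =>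
            pdx P u x y z ^ 2 + pdx Q u x y z ^ 2 + pdy P u x y z ^ 2 + pdy Q u x y z ^ 2)).
Proof.
  destruct (wedge_uniform_box T Lx Ly (regular Rf P Q)) as (eta & heta & Heta).
  - intros u x y z Hw. destruct (hC2 u x y z Hw) as (HR & HP & HQ).
    exact (regular_box_of_C2_at Rf P Q u x y z HR HP HQ).
  - exact (energy_inequality T Lx Ly Rf P Q hT hLx hLy hperR hperP hperQ heq1 heq2 heq3
             eta heta Heta).
Qed.
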